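(* Let $n\ge 2$ and consider the $n$th order ODE $x_n=F(t,x,x_1,\ldots,x_{n-1})$. Suppose there exist smooth functions $z=z(t,x)$ and $\zeta=\zeta(t,x,x_1)$, with $\zeta_{x_1}\neq 0$ and $D_t(z)\neq 0$, such that the equation can be written in terms of $\{z,\zeta,\zeta_1,\ldots,\zeta_{n-1}\}$ as an ODE of order $n-1$, i.e. the submanifold $x_n=F$ coincides (locally) with $\Delta(z,\zeta,\zeta_1,\ldots,\zeta_{n-1})=0$ for some function $\Delta$. Then the pair $(\mathbf{X},\lambda)$ given by $$\mathbf{X}=-z_x(t,x)\,\partial_t+z_t(t,x)\,\partial_x,\qquad \lambda=\frac{z_x\zeta_t-z_t\zeta_x}{D_t(z)\,\zeta_{x_1}}-\frac{D_t(z_t)+D_t(z_x)\,x_1}{D_t(z)}$$ defines a $\lambda$-symmetry of the equation, and $z$ and $\zeta$ are invariants of $\mathbf{X}^{[\lambda,(1)]}$.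
   Context: Coordinates $(t,x,x_1,x_2,\ldots)$ on jet spaces $M^{(k)}$ over an open set $M\subset\mathbb{R}^2$, $x_i=d^ix/dt^i$; all functions smooth. $D_t=\partial_t+x_1\partial_x+x_2\partial_{x_1}+\cdots$ is the total derivative. $\zeta_1=D_t\zeta/D_tz$ and $\zeta_{i+1}=D_t\zeta_i/D_tz$. For $\lambda=\lambda(t,x,x_1)$ and a vector field $\mathbf{X}=\rho(t,x)\partial_t+\phi^0(t,x)\partial_x$, the $k$th order $\lambda$-prolongation is $\mathbf{X}^{[\lambda,(k)]}=\rho\partial_t+\phi^0\partial_x+\sum_{i=1}^k\phi^{[\lambda,(i)]}\partial_{x_i}$, where $\phi^{[\lambda,(0)]}=\phi^0$ and $\phi^{[\lambda,(i)]}=D_t(\phi^{[\lambda,(i-1)]})-D_t(\rho)x_i+\lambda(\phi^{[\lambda,(i-1)]}-\rho x_i)$. $\mathbf{X}$ is a $\lambda$-symmetry of $x_n=F$ (the pair $(\mathbf X,\lambda)$ defines a $\lambda$-symmetry) if $\mathbf{X}^{[\lambda,(n)]}$ is tangent to the submanifold $\{x_n=F\}$, i.e. $\mathbf{X}^{[\lambda,(n)]}(x_n-F)=0$ whenever $x_n=F$. *)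

From Stdlib Require Import Reals Lra Lia ClassicalEpsilon.
Open Scope R_scope.

(* A function on the (infinite) jet space with coordinates
   (t, x, x_1, x_2, ...): [f t xs] with [xs 0 = x], [xs i = x_i]. *)
Definition Jet := R -> (nat -> R) -> R.

(* the (unique, when it exists) derivative of g at a; 0 otherwise *)
Definition Deriv (g : R -> R) (a : R) : R :=
  epsilon (inhabits 0) (fun l => derivable_pt_lim g a l).

Definition upd (xs : nat -> R) (i : nat) (s : R) : nat -> R :=
  fun j => if Nat.eqb j i then s else xs j.

Definition pt (f : Jet) : Jet := fun t xs => Deriv (fun s => f s xs) t.
Definition px (i : nat) (f : Jet) : Jet :=
  fun t xs => Deriv (fun s => f t (upd xs i s)) (xs i).

Definition jet_order (k : nat) (f : Jet) : Prop :=
  forall t xs ys, (forall i, (i <= k)%nat -> xs i = ys i) -> f t xs = f t ys.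

Definition open_jet (k : nat) (U : R -> (nat -> R) -> Prop) : Prop :=
  forall t xs, U t xs -> exists d, 0 < d /\
    forall t' ys, Rabs (t' - t) < d ->
      (forall i, (i <= k)%nat -> Rabs (ys i - xs i) < d) -> U t' ys.

Definition cont_at (f : Jet) (t : R) (xs : nat -> R) : Prop :=
  forall eps, 0 < eps -> exists d, 0 < d /\
    forall t' ys, Rabs (t' - t) < d -> (forall i, Rabs (ys i - xs i) < d) ->
      Rabs (f t' ys - f t xs) < eps.

CoInductive smooth_on (U : R -> (nat -> R) -> Prop) : Jet -> Prop :=
  smooth_on_intro : forall f : Jet,
    (forall t xs, U t xs -> cont_at f t xs) ->
    (forall t xs, U t xs -> exists l, derivable_pt_lim (fun s => f s xs) t l) ->
    (forall i t xs, U t xs ->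
        exists l, derivable_pt_lim (fun s => f t (upd xs i s)) (xs i) l) ->
    smooth_on U (pt f) ->
    (forall i, smooth_on U (px i f)) ->
    smooth_on U f.

(* Total derivative D_t = d_t + x_1 d_x + x_2 d_{x_1} + ... , truncated after
   x_{K+1} d_{x_K}; this is exact on functions of order <= K. *)
Definition Dt (K : nat) (f : Jet) : Jet :=
  fun t xs => pt f t xs + sum_f_R0 (fun i => xs (S i) * px i f t xs) K.

Fixpoint zeta_seq (K : nat) (z zeta : Jet) (i : nat) : Jet :=
  match i with
  | O => zeta
  | S j => fun t xs => Dt K (zeta_seq K z zeta j) t xs / Dt K z t xs
  end.

(* lambda-prolongation coefficients of X = rho d_t + phi0 d_x:
   phi^(0) = phi0,
   phi^(i+1) = D_t(phi^(i)) - D_t(rho) x_{i+1} + lambda (phi^(i) - rho x_{i+1}) *)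
Fixpoint phi_lam (K : nat) (rho phi0 lam : Jet) (i : nat) : Jet :=
  match i with
  | O => phi0
  | S j => fun t xs =>
      Dt K (phi_lam K rho phi0 lam j) t xs - Dt K rho t xs * xs (S j)
      + lam t xs * (phi_lam K rho phi0 lam j t xs - rho t xs * xs (S j))
  end.

Definition lam_prol (K : nat) (rho phi0 lam : Jet) (k : nat) (f : Jet) : Jet :=
  fun t xs => rho t xs * pt f t xs
    + sum_f_R0 (fun i => phi_lam K rho phi0 lam i t xs * px i f t xs) k.

From Stdlib Require Import Reals Ranalysis5 Lra Lia ClassicalEpsilon FunctionalExtensionality PropExtensionality.
From Coquelicot Require Import Coquelicot.
Open Scope R_scope.

(* Write V for the lambda-prolongation X^[lambda,(n)].
   - Algebra.  V is a derivation, and for f of order < n with V f = 0 one has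
     V (D_t f) = -(D_t rho + lambda rho) D_t f.  As zeta_{k+1} is the quotient
     D_t zeta_k / D_t z of two functions scaled by V by the same factor, V kills
     every zeta_k once it kills z and zeta; that it does is a direct
     computation, which is what determines X and lambda.
   - Geometry.  Through a point p of {x_n = F} we build a curve with velocity
     V(p) along which z, zeta_0, ..., zeta_{n-1} are constant: starting from
     the line in the direction V(p), coordinates are corrected one at a time
     by a one-dimensional implicit function theorem (possible since
     d zeta_k / d x_{k+1} <> 0 and D_t z <> 0).  Along this curve
     Delta(z, zeta_0, ...) stays 0, so x_n - F vanishes on it, whence
     V (x_n - F) (p) = 0.
   The file first develops the analytic toolbox: derivatives of real
   functions, coordinates of the jet space, and the class [smooth_cl U] of
   functions generated from smooth ones by field operations, which is closed
   under partial derivatives and whose members are continuous and satisfy the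
   Schwarz symmetry. *)

Lemma Deriv_eq g a l : derivable_pt_lim g a l -> Deriv g a = l.
Proof.
  intro H. unfold Deriv.
  assert (E : exists l, derivable_pt_lim g a l) by eauto.
  eapply uniqueness_limite; [apply (epsilon_spec (inhabits 0) _ E) | exact H].
Qed.

Lemma Deriv_spec g a : (exists l, derivable_pt_lim g a l) -> derivable_pt_lim g a (Deriv g a).
Proof. intros [l Hl]. rewrite (Deriv_eq _ _ _ Hl). exact Hl. Qed.

Lemma derivable_loc g h a l d : derivable_pt_lim g a l -> 0 < d ->
  (forall s, Rabs (s - a) < d -> g s = h s) -> derivable_pt_lim h a l.
Proof.
  intros H Hd E eps Heps. destruct (H eps Heps) as [del Hdel].
  assert (H0 : 0 < Rmin del d) by (apply Rmin_pos; [apply cond_pos | lra]).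
  exists (mkposreal _ H0). intros x Hx Hxs. simpl in Hxs.
  assert (Hm1 := Rmin_l del d). assert (Hm2 := Rmin_r del d).
  rewrite <- (E (a + x)) by (replace (a + x - a) with x by ring; lra).
  rewrite <- (E a) by (rewrite Rminus_diag, Rabs_R0; lra).
  apply Hdel; auto. lra.
Qed.

Lemma derivable_ext g h a l : derivable_pt_lim g a l -> (forall s, g s = h s) ->
  derivable_pt_lim h a l.
Proof. intros H E. apply (derivable_loc g h a l 1); auto; lra. Qed.

Lemma Deriv_loc g h a d : 0 < d -> (forall s, Rabs (s - a) < d -> g s = h s) ->
  Deriv g a = Deriv h a.
Proof.
  intros Hd E. unfold Deriv. f_equal. apply functional_extensionality; intro l.
  apply propositional_extensionality.
  split; intro; eapply derivable_loc; eauto. intros; symmetry; auto.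
Qed.

Lemma Deriv_const c a : Deriv (fun _ => c) a = 0.
Proof.
  apply Deriv_eq. apply (derivable_ext (fct_cte c)); [apply derivable_pt_lim_const | reflexivity].
Qed.

(* Derivatives of constants and of the identity, for unfolded lambda-terms. *)
Lemma derivable_const c a : derivable_pt_lim (fun _ => c) a 0.
Proof. apply (derivable_ext (fct_cte c)); [apply derivable_pt_lim_const | reflexivity]. Qed.

Lemma derivable_id a : derivable_pt_lim (fun s => s) a 1.
Proof. apply (derivable_ext id); [apply derivable_pt_lim_id | reflexivity]. Qed.

Lemma derivable_add_scal (g rr : R -> R) x l1 l2 d l :
  derivable_pt_lim g x l1 -> derivable_pt_lim rr x l2 -> l = l1 + l2 * d ->
  derivable_pt_lim (fun s => g s + rr s * d) x l.
Proof.
  intros H1 H2 ->.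
  assert (H := derivable_pt_lim_plus _ _ x _ _ H1
                 (derivable_pt_lim_mult rr (fct_cte d) x l2 0 H2 (derivable_pt_lim_const d x))).
  replace (l1 + l2 * d) with (l1 + (l2 * fct_cte d x + rr x * 0)) by (unfold fct_cte; ring).
  eapply derivable_ext; [exact H | reflexivity].
Qed.

Lemma derivable_affine a c x : derivable_pt_lim (fun s => a + s * c) x c.
Proof. apply (derivable_add_scal _ _ x 0 1); [apply derivable_const | apply derivable_id | ring]. Qed.

Lemma derivable_first_order g l : derivable_pt_lim g 0 l -> forall eps, 0 < eps ->
  exists del, 0 < del /\ forall s, Rabs s < del -> Rabs (g s - g 0 - l * s) <= eps * Rabs s.
Proof.
  intros H eps Heps. destruct (H eps Heps) as [d Hd]. exists d. split; [apply cond_pos |].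
  intros s Hs. destruct (Req_dec s 0) as [->|Hs0].
  - rewrite Rabs_R0. replace (g 0 - g 0 - l * 0) with 0 by ring. rewrite Rabs_R0. lra.
  - specialize (Hd s Hs0 Hs). rewrite Rplus_0_l in Hd.
    replace (g s - g 0 - l * s) with (((g s - g 0) / s - l) * s) by (field; auto).
    rewrite Rabs_mult. apply Rmult_le_compat_r; [apply Rabs_pos | lra].
Qed.

Lemma mean_value (g g' : R -> R) a b :
  (forall c, Rabs (c - a) <= Rabs (b - a) -> derivable_pt_lim g c (g' c)) ->
  exists c, Rabs (c - a) <= Rabs (b - a) /\ g b - g a = g' c * (b - a).
Proof.
  intro H. destruct (Rtotal_order a b) as [Hab|[->|Hab]].
  - destruct (MVT_cor2 g g' a b Hab) as [c [E Hc]].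
    { intros c Hc. apply H. rewrite !Rabs_right by lra. lra. }
    exists c. split; [rewrite !Rabs_right by lra; lra | exact E].
  - exists b. split; [lra | ring].
  - destruct (MVT_cor2 g g' b a Hab) as [c [E Hc]].
    { intros c Hc. apply H. rewrite (Rabs_left (b - a)) by lra.
      destruct (Rle_dec 0 (c - a)); [rewrite Rabs_right | rewrite Rabs_left]; lra. }
    exists c. split; [rewrite (Rabs_left (b - a)), Rabs_left by lra; lra | lra].
Qed.

Lemma upd_same xs i : upd xs i (xs i) = xs.
Proof.
  apply functional_extensionality; intro j. unfold upd.
  destruct (Nat.eqb_spec j i); subst; auto.
Qed.

Lemma upd_upd xs i a b : upd (upd xs i a) i b = upd xs i b.
Proof.
  apply functional_extensionality; intro j. unfold upd.
  destruct (Nat.eqb_spec j i); auto.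
Qed.

Lemma upd_eq xs i a : upd xs i a i = a.
Proof. unfold upd. rewrite Nat.eqb_refl. reflexivity. Qed.

Lemma upd_neq xs i j a : j <> i -> upd xs i a j = xs j.
Proof. intro H. unfold upd. destruct (Nat.eqb_spec j i); [lia | reflexivity]. Qed.

Ltac upd_cases :=
  unfold upd; repeat match goal with |- context [Nat.eqb ?a ?b] => destruct (Nat.eqb_spec a b) end;
  subst; try congruence; try lia; auto.

(* A coordinate is [None] for t and [Some i] for x_i. *)
Definition coord := option nat.
Definition line_t (c : coord) (t s : R) : R := match c with None => s | Some _ => t end.
Definition line_x (c : coord) (xs : nat -> R) (s : R) : nat -> R :=
  match c with None => xs | Some i => upd xs i s end.
Definition base (c : coord) (t : R) (xs : nat -> R) : R :=
  match c with None => t | Some i => xs i end.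

Definition pd (c : coord) (f : Jet) : Jet := match c with None => pt f | Some i => px i f end.

Lemma pd_line c f t xs :
  pd c f t xs = Deriv (fun s => f (line_t c t s) (line_x c xs s)) (base c t xs).
Proof. destruct c; reflexivity. Qed.

Lemma line_base c t xs : line_t c t (base c t xs) = t /\ line_x c xs (base c t xs) = xs.
Proof. destruct c; simpl; auto using upd_same. Qed.

Lemma line_close c t xs s :
  Rabs (line_t c t s - t) <= Rabs (s - base c t xs) /\
  forall i, Rabs (line_x c xs s i - xs i) <= Rabs (s - base c t xs).
Proof.
  assert (A := Rabs_pos (s - base c t xs)).
  destruct c as [j|]; simpl in *; (split; [|intro i]);
    try (rewrite Rminus_diag, Rabs_R0; lra); try lra.
  unfold upd; destruct (Nat.eqb_spec i j); [subst; lra | rewrite Rminus_diag, Rabs_R0; lra].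
Qed.

Definition open_sup (U : R -> (nat -> R) -> Prop) : Prop :=
  forall t xs, U t xs -> exists d, 0 < d /\
    forall t' ys, Rabs (t' - t) < d -> (forall i, Rabs (ys i - xs i) < d) -> U t' ys.

Lemma open_jet_sup n U : open_jet n U -> open_sup U.
Proof. intros H t xs Hu. destruct (H t xs Hu) as [d [Hd Hd2]]. exists d; auto. Qed.

Lemma line_in U c t xs : open_sup U -> U t xs -> exists d, 0 < d /\
  forall s, Rabs (s - base c t xs) < d -> U (line_t c t s) (line_x c xs s).
Proof.
  intros HU Hu. destruct (HU t xs Hu) as [d [Hd Hd2]]. exists d; split; auto.
  intros s Hs. destruct (line_close c t xs s) as [A B].
  apply Hd2; [lra | intro i; specialize (B i); lra].
Qed.

(** * A class of differentiable functions closed under partial derivatives *)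

Inductive smooth_cl (U : R -> (nat -> R) -> Prop) : Jet -> Prop :=
| cl_smooth f : smooth_on U f -> smooth_cl U f
| cl_const c : smooth_cl U (fun _ _ => c)
| cl_coord j : smooth_cl U (fun _ xs => xs j)
| cl_plus f g : smooth_cl U f -> smooth_cl U g -> smooth_cl U (fun t xs => f t xs + g t xs)
| cl_mult f g : smooth_cl U f -> smooth_cl U g -> smooth_cl U (fun t xs => f t xs * g t xs)
| cl_inv f : smooth_cl U f -> (forall t xs, U t xs -> f t xs <> 0) ->
    smooth_cl U (fun t xs => / f t xs)
| cl_ext f g : smooth_cl U f -> (forall t xs, U t xs -> f t xs = g t xs) -> smooth_cl U g.

Lemma cl_minus U f g : smooth_cl U f -> smooth_cl U g -> smooth_cl U (fun t xs => f t xs - g t xs).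
Proof.
  intros. apply (cl_ext U (fun t xs => f t xs + (fun _ _ => -1) t xs * g t xs)).
  - apply cl_plus; auto. apply cl_mult; auto. apply cl_const.
  - intros; simpl; ring.
Qed.

Definition dcoord (c : coord) (j : nat) : R :=
  match c with None => 0 | Some i => if Nat.eqb j i then 1 else 0 end.

Lemma pd_const c (a : R) t xs : pd c (fun _ _ => a) t xs = 0.
Proof. rewrite pd_line. apply Deriv_const. Qed.

Lemma pd_coord c j t xs : pd c (fun _ xs => xs j) t xs = dcoord c j.
Proof.
  rewrite pd_line. destruct c as [i|]; simpl; [| apply Deriv_const].
  unfold upd. destruct (Nat.eqb_spec j i); [| apply Deriv_const].
  apply Deriv_eq, derivable_id.
Qed.

Section SmoothClass.

Variable U : R -> (nat -> R) -> Prop.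
Hypothesis HU : open_sup U.

Lemma pd_ext f g c t xs : (forall t xs, U t xs -> f t xs = g t xs) -> U t xs ->
  pd c f t xs = pd c g t xs.
Proof.
  intros E Hu. rewrite !pd_line. destruct (line_in U c t xs HU Hu) as [d [Hd Hd2]].
  apply (Deriv_loc _ _ _ d Hd). intros; apply E; auto.
Qed.

Lemma cl_derivable f c t xs : smooth_cl U f -> U t xs ->
  exists l, derivable_pt_lim (fun s => f (line_t c t s) (line_x c xs s)) (base c t xs) l.
Proof.
  intro H. revert c t xs. induction H as [f Hs| a | j | f g _ IHf _ IHg | f g _ IHf _ IHg
    | f _ IHf Hnz | f g _ IHf E]; intros c t xs Hu.
  - destruct Hs as [f _ Ht Hx _ _]. destruct c; simpl; auto.
  - exists 0. apply derivable_const.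
  - destruct c as [i|]; simpl; [unfold upd; destruct (Nat.eqb_spec j i) |].
    + exists 1. apply derivable_id.
    + exists 0. apply derivable_const.
    + exists 0. apply derivable_const.
  - destruct (IHf c t xs Hu) as [l1 H1], (IHg c t xs Hu) as [l2 H2].
    exists (l1 + l2). apply (derivable_pt_lim_plus _ _ _ _ _ H1 H2).
  - destruct (IHf c t xs Hu) as [l1 H1], (IHg c t xs Hu) as [l2 H2].
    eexists. apply (derivable_pt_lim_mult _ _ _ _ _ H1 H2).
  - destruct (IHf c t xs Hu) as [l1 H1], (line_in U c t xs HU Hu) as [d [Hd Hd2]].
    assert (Hf0 : f (line_t c t (base c t xs)) (line_x c xs (base c t xs)) <> 0).
    { destruct (line_base c t xs) as [-> ->]. auto. }
    eexists. eapply derivable_loc;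
      [apply (derivable_pt_lim_div _ _ _ _ _ (derivable_pt_lim_const 1 _) H1 Hf0) | exact Hd |].
    intros s Hs. unfold div_fct, fct_cte. field. auto.
  - destruct (IHf c t xs Hu) as [l1 H1], (line_in U c t xs HU Hu) as [d [Hd Hd2]].
    exists l1. eapply derivable_loc; [exact H1 | exact Hd | intros s Hs; apply E; auto].
Qed.

Lemma cl_pd_spec f c t xs : smooth_cl U f -> U t xs ->
  derivable_pt_lim (fun s => f (line_t c t s) (line_x c xs s)) (base c t xs) (pd c f t xs).
Proof. intros. rewrite pd_line. apply Deriv_spec, cl_derivable; auto. Qed.

Lemma pd_plus f g c t xs : smooth_cl U f -> smooth_cl U g -> U t xs ->
  pd c (fun t xs => f t xs + g t xs) t xs = pd c f t xs + pd c g t xs.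
Proof.
  intros Hf Hg Hu. rewrite pd_line. apply Deriv_eq.
  exact (derivable_pt_lim_plus _ _ _ _ _ (cl_pd_spec f c t xs Hf Hu) (cl_pd_spec g c t xs Hg Hu)).
Qed.

Lemma pd_mult f g c t xs : smooth_cl U f -> smooth_cl U g -> U t xs ->
  pd c (fun t xs => f t xs * g t xs) t xs = pd c f t xs * g t xs + f t xs * pd c g t xs.
Proof.
  intros Hf Hg Hu. rewrite pd_line. apply Deriv_eq.
  pose proof (derivable_pt_lim_mult _ _ _ _ _ (cl_pd_spec f c t xs Hf Hu) (cl_pd_spec g c t xs Hg Hu))
    as H.
  cbv beta in H. destruct (line_base c t xs) as [E1 E2]. rewrite E1, E2 in H. exact H.
Qed.

Lemma pd_inv f c t xs : smooth_cl U f -> (forall t xs, U t xs -> f t xs <> 0) -> U t xs ->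
  pd c (fun t xs => / f t xs) t xs = - pd c f t xs * (/ f t xs * / f t xs).
Proof.
  intros Hf Hnz Hu. rewrite pd_line. apply Deriv_eq.
  destruct (line_in U c t xs HU Hu) as [d [Hd Hd2]].
  destruct (line_base c t xs) as [E1 E2].
  assert (Hf0 : f (line_t c t (base c t xs)) (line_x c xs (base c t xs)) <> 0)
    by (rewrite E1, E2; auto).
  pose proof (derivable_pt_lim_div _ _ _ _ _ (derivable_pt_lim_const 1 _) (cl_pd_spec f c t xs Hf Hu) Hf0)
    as H.
  cbv beta in H. rewrite E1, E2 in H. unfold fct_cte in H.
  replace (- pd c f t xs * (/ f t xs * / f t xs))
    with ((0 * f t xs - pd c f t xs * 1) / (f t xs)²) by (unfold Rsqr; field; auto).
  eapply derivable_loc; [exact H | exact Hd |].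
  intros s Hs. unfold div_fct, fct_cte. field. auto.
Qed.

Lemma cl_pd f c : smooth_cl U f -> smooth_cl U (pd c f).
Proof.
  intro H. revert c. induction H as [f Hs| a | j | f g Hf IHf Hg IHg | f g Hf IHf Hg IHg
    | f Hf IHf Hnz | f g Hf IHf E]; intro c.
  - destruct Hs as [f _ _ _ Ht Hx]. destruct c; simpl; apply cl_smooth; auto.
  - apply (cl_ext U (fun _ _ => 0)); [apply cl_const | intros; rewrite pd_const; auto].
  - apply (cl_ext U (fun _ _ => dcoord c j)); [apply cl_const | intros; rewrite pd_coord; auto].
  - eapply cl_ext; [apply (cl_plus U _ _ (IHf c) (IHg c)) | intros; rewrite pd_plus; auto].
  - eapply cl_ext; [apply (cl_plus U _ _ (cl_mult U _ _ (IHf c) Hg) (cl_mult U _ _ Hf (IHg c))) |].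
    intros; rewrite pd_mult; auto.
  - eapply cl_ext.
    + apply (cl_mult U _ _ (cl_minus U _ _ (cl_const U 0) (IHf c))
               (cl_mult U _ _ (cl_inv U _ Hf Hnz) (cl_inv U _ Hf Hnz))).
    + intros; rewrite pd_inv; auto. ring.
  - eapply cl_ext; [apply (IHf c) | intros; apply pd_ext; auto].
Qed.

Lemma cont_op2 (op : R -> R -> R) f g t xs : cont_at f t xs -> cont_at g t xs ->
  continuity_2d_pt op (f t xs) (g t xs) -> cont_at (fun t xs => op (f t xs) (g t xs)) t xs.
Proof.
  intros Hf Hg Hop eps Heps. destruct (Hop (mkposreal _ Heps)) as [del Hdel].
  destruct (Hf del (cond_pos del)) as [d1 [Hd1 H1]], (Hg del (cond_pos del)) as [d2 [Hd2 H2]].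
  exists (Rmin d1 d2). split; [apply Rmin_pos; auto |].
  intros t' ys Ht Hy. assert (Hm1 := Rmin_l d1 d2). assert (Hm2 := Rmin_r d1 d2).
  apply (Hdel (f t' ys) (g t' ys)).
  - apply H1; [lra | intro i; specialize (Hy i); lra].
  - apply H2; [lra | intro i; specialize (Hy i); lra].
Qed.

Lemma cl_cont f t xs : smooth_cl U f -> U t xs -> cont_at f t xs.
Proof.
  intro H. revert t xs. induction H as [f Hs| a | j | f g _ IHf _ IHg | f g _ IHf _ IHg
    | f _ IHf Hnz | f g _ IHf E]; intros t xs Hu.
  - destruct Hs as [f Hc _ _ _ _]. auto.
  - intros eps Heps. exists 1. split; [lra |]. intros. rewrite Rminus_diag, Rabs_R0. auto.
  - intros eps Heps. exists eps. auto.
  - apply (cont_op2 (fun u v => u + v)); auto.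
    apply (continuity_2d_pt_plus (fun u _ => u) (fun _ v => v));
      [apply continuity_2d_pt_id1 | apply continuity_2d_pt_id2].
  - apply (cont_op2 (fun u v => u * v)); auto.
    apply (continuity_2d_pt_mult (fun u _ => u) (fun _ v => v));
      [apply continuity_2d_pt_id1 | apply continuity_2d_pt_id2].
  - apply (cont_op2 (fun u v => / u) f f); auto.
    apply (continuity_2d_pt_inv (fun u _ => u)); [apply continuity_2d_pt_id1 | auto].
  - intros eps Heps. destruct (HU t xs Hu) as [d0 [Hd0 H0]].
    destruct (IHf t xs Hu eps Heps) as [d1 [Hd1 H1]].
    exists (Rmin d0 d1). split; [apply Rmin_pos; auto |].
    intros t' ys Ht Hy. assert (Hm1 := Rmin_l d0 d1). assert (Hm2 := Rmin_r d0 d1).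
    rewrite <- !E; auto.
    + apply H1; [lra | intro i; specialize (Hy i); lra].
    + apply H0; [lra | intro i; specialize (Hy i); lra].
Qed.

End SmoothClass.

(** * Symmetry of second partial derivatives *)

Definition plane_t (c1 c2 : coord) t (u v : R) : R := line_t c2 (line_t c1 t u) v.
Definition plane_x (c1 c2 : coord) xs (u v : R) : nat -> R := line_x c2 (line_x c1 xs u) v.
Definition on_plane (c1 c2 : coord) (f : Jet) t xs (u v : R) : R :=
  f (plane_t c1 c2 t u v) (plane_x c1 c2 xs u v).

Lemma plane_base c1 c2 t xs : c1 <> c2 ->
  plane_t c1 c2 t (base c1 t xs) (base c2 t xs) = t /\
  plane_x c1 c2 xs (base c1 t xs) (base c2 t xs) = xs.
Proof.
  intro H. unfold plane_t, plane_x.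
  destruct c1 as [i|]; destruct c2 as [j|]; simpl; try congruence; rewrite ?upd_same; auto.
Qed.

Lemma plane_line2 c1 c2 t xs u v w : c1 <> c2 ->
  line_t c2 (plane_t c1 c2 t u v) w = plane_t c1 c2 t u w /\
  line_x c2 (plane_x c1 c2 xs u v) w = plane_x c1 c2 xs u w /\
  base c2 (plane_t c1 c2 t u v) (plane_x c1 c2 xs u v) = v.
Proof.
  intro H. unfold plane_t, plane_x.
  destruct c1 as [i|]; destruct c2 as [j|]; simpl; try congruence;
    (split; [|split]); auto; try (apply functional_extensionality; intro k); upd_cases.
Qed.

Lemma plane_line1 c1 c2 t xs u v w : c1 <> c2 ->
  line_t c1 (plane_t c1 c2 t u v) w = plane_t c1 c2 t w v /\
  line_x c1 (plane_x c1 c2 xs u v) w = plane_x c1 c2 xs w v /\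
  base c1 (plane_t c1 c2 t u v) (plane_x c1 c2 xs u v) = u.
Proof.
  intro H. unfold plane_t, plane_x.
  destruct c1 as [i|]; destruct c2 as [j|]; simpl; try congruence;
    (split; [|split]); auto; try (apply functional_extensionality; intro k); upd_cases.
Qed.

Lemma plane_close c1 c2 t xs u v : c1 <> c2 ->
  Rabs (plane_t c1 c2 t u v - t) <= Rabs (u - base c1 t xs) + Rabs (v - base c2 t xs) /\
  forall i, Rabs (plane_x c1 c2 xs u v i - xs i) <= Rabs (u - base c1 t xs) + Rabs (v - base c2 t xs).
Proof.
  intro H. unfold plane_t, plane_x.
  assert (A1 := Rabs_pos (u - base c1 t xs)). assert (A2 := Rabs_pos (v - base c2 t xs)).
  split; [|intro k]; destruct c1 as [i|]; destruct c2 as [j|]; simpl in *; try congruence;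
    try (rewrite Rminus_diag, Rabs_R0; lra); try lra; upd_cases;
    try (rewrite Rminus_diag, Rabs_R0; lra); lra.
Qed.

Section Schwarz.

Variable U : R -> (nat -> R) -> Prop.
Hypothesis HU : open_sup U.

Lemma plane_in c1 c2 t xs : U t xs -> c1 <> c2 -> exists del, 0 < del /\
  forall u v, Rabs (u - base c1 t xs) < del -> Rabs (v - base c2 t xs) < del ->
    U (plane_t c1 c2 t u v) (plane_x c1 c2 xs u v).
Proof.
  intros Hu Hc. destruct (HU t xs Hu) as [d [Hd H]]. exists (d / 2). split; [lra |].
  intros u v H1 H2. destruct (plane_close c1 c2 t xs u v Hc) as [A B].
  apply H; [lra | intro i; specialize (B i); lra].
Qed.

Lemma plane_derivable2 g c1 c2 t xs u v : smooth_cl U g -> c1 <> c2 ->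
  U (plane_t c1 c2 t u v) (plane_x c1 c2 xs u v) ->
  derivable_pt_lim (fun w => on_plane c1 c2 g t xs u w) v (on_plane c1 c2 (pd c2 g) t xs u v).
Proof.
  intros Hg Hc Hu. pose proof (cl_pd_spec U HU g c2 _ _ Hg Hu) as H.
  destruct (plane_line2 c1 c2 t xs u v v Hc) as [_ [_ E]]. rewrite E in H.
  eapply derivable_ext; [exact H |]. intro w.
  destruct (plane_line2 c1 c2 t xs u v w Hc) as [E1 [E2 _]]. rewrite E1, E2. reflexivity.
Qed.

Lemma plane_derivable1 g c1 c2 t xs u v : smooth_cl U g -> c1 <> c2 ->
  U (plane_t c1 c2 t u v) (plane_x c1 c2 xs u v) ->
  derivable_pt_lim (fun w => on_plane c1 c2 g t xs w v) u (on_plane c1 c2 (pd c1 g) t xs u v).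
Proof.
  intros Hg Hc Hu. pose proof (cl_pd_spec U HU g c1 _ _ Hg Hu) as H.
  destruct (plane_line1 c1 c2 t xs u v v Hc) as [_ [_ E]]. rewrite E in H.
  eapply derivable_ext; [exact H |]. intro w.
  destruct (plane_line1 c1 c2 t xs u v w Hc) as [E1 [E2 _]]. rewrite E1, E2. reflexivity.
Qed.

Lemma plane_cont h c1 c2 t xs : smooth_cl U h -> U t xs -> c1 <> c2 ->
  continuity_2d_pt (on_plane c1 c2 h t xs) (base c1 t xs) (base c2 t xs).
Proof.
  intros Hh Hu Hc eps. destruct (cl_cont U HU h t xs Hh Hu eps (cond_pos eps)) as [d [Hd H]].
  assert (Hd2 : 0 < d / 2) by lra. exists (mkposreal _ Hd2). simpl. intros u v H1 H2.
  unfold on_plane. destruct (plane_base c1 c2 t xs Hc) as [-> ->].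
  destruct (plane_close c1 c2 t xs u v Hc) as [A B].
  apply H; [lra | intro i; specialize (B i); lra].
Qed.

Lemma Derive_of_derivable g a l : derivable_pt_lim g a l -> Derive g a = l.
Proof. intro H. apply is_derive_unique, is_derive_Reals, H. Qed.

Lemma ex_derive_of_derivable g a l : derivable_pt_lim g a l -> ex_derive g a.
Proof. intro H. exists l. apply is_derive_Reals, H. Qed.

Lemma locally_ball a r (P : R -> Prop) : 0 < r -> (forall z, Rabs (z - a) < r -> P z) -> locally a P.
Proof. intros Hr H. exists (mkposreal r Hr). intros z Hz. apply H, Hz. Qed.

Lemma locally_in_ball x del u : Rabs (u - x) < del -> locally u (fun z => Rabs (z - x) < del).
Proof.
  intro Hu. apply (locally_ball u (del - Rabs (u - x))); [lra |].
  intros z Hz. assert (Rabs (z - x) <= Rabs (z - u) + Rabs (u - x))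
    by (replace (z - x) with ((z - u) + (u - x)) by ring; apply Rabs_triang).
  lra.
Qed.

(* Schwarz's theorem for the class, via Coquelicot's two-variable version
   applied on the plane of the two coordinates. *)
Lemma cl_schwarz f c1 c2 t xs : smooth_cl U f -> U t xs ->
  pd c1 (pd c2 f) t xs = pd c2 (pd c1 f) t xs.
Proof.
  intros Hf Hu.
  assert (Hdec : {c1 = c2} + {c1 <> c2}) by (decide equality; apply Nat.eq_dec).
  destruct Hdec as [<-|Hc]; [reflexivity |].
  set (x := base c1 t xs). set (y := base c2 t xs). set (F2 := on_plane c1 c2 f t xs).
  destruct (plane_in c1 c2 t xs Hu Hc) as [del [Hdel HQ]]. fold x y in HQ.
  assert (Hf1 := cl_pd U HU f c1 Hf). assert (Hf2 := cl_pd U HU f c2 Hf).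
  (* on the box of size del, the partial derivatives of F2 are those of f *)
  assert (L2 : forall u v, Rabs (u - x) < del -> Rabs (v - y) < del ->
     locally u (fun z => Derive (fun w => F2 z w) v = on_plane c1 c2 (pd c2 f) t xs z v)).
  { intros u v Hu1 Hv1. apply (filter_imp _ _ (fun z Hz => Derive_of_derivable _ _ _
      (plane_derivable2 f c1 c2 t xs z v Hf Hc (HQ z v Hz Hv1))) (locally_in_ball x del u Hu1)). }
  assert (L1 : forall u v, Rabs (u - x) < del -> Rabs (v - y) < del ->
     locally v (fun z => Derive (fun w => F2 w z) u = on_plane c1 c2 (pd c1 f) t xs u z)).
  { intros u v Hu1 Hv1. apply (filter_imp _ _ (fun z Hz => Derive_of_derivable _ _ _
      (plane_derivable1 f c1 c2 t xs u z Hf Hc (HQ u z Hu1 Hz))) (locally_in_ball y del v Hv1)). }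
  assert (M1 : forall u v, Rabs (u - x) < del -> Rabs (v - y) < del ->
     Derive (fun z => Derive (fun w => F2 z w) v) u = on_plane c1 c2 (pd c1 (pd c2 f)) t xs u v).
  { intros u v Hu1 Hv1. etransitivity; [apply Derive_ext_loc, (L2 u v Hu1 Hv1) |].
    apply Derive_of_derivable, plane_derivable1; auto. }
  assert (M2 : forall u v, Rabs (u - x) < del -> Rabs (v - y) < del ->
     Derive (fun z => Derive (fun w => F2 w z) u) v = on_plane c1 c2 (pd c2 (pd c1 f)) t xs u v).
  { intros u v Hu1 Hv1. etransitivity; [apply Derive_ext_loc, (L1 u v Hu1 Hv1) |].
    apply Derive_of_derivable, plane_derivable2; auto. }
  assert (Hx : Rabs (x - x) < del) by (rewrite Rminus_diag, Rabs_R0; lra).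
  assert (Hy : Rabs (y - y) < del) by (rewrite Rminus_diag, Rabs_R0; lra).
  assert (HS := Schwarz F2 x y). rewrite (M1 x y), (M2 x y) in HS by auto.
  unfold on_plane in HS. destruct (plane_base c1 c2 t xs Hc) as [E1 E2]. fold x y in E1, E2.
  rewrite E1, E2 in HS. apply HS.
  - exists (mkposreal del Hdel). simpl. intros u v Hu1 Hv1. repeat split.
    + eapply ex_derive_of_derivable, plane_derivable1; auto.
    + eapply ex_derive_of_derivable, plane_derivable2; auto.
    + eapply ex_derive_ext_loc; [apply (filter_imp _ _ (fun z H => eq_sym H) (L2 u v Hu1 Hv1)) |].
      eapply ex_derive_of_derivable, plane_derivable1; auto.
    + eapply ex_derive_ext_loc; [apply (filter_imp _ _ (fun z H => eq_sym H) (L1 u v Hu1 Hv1)) |].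
      eapply ex_derive_of_derivable, plane_derivable2; auto.
  - eapply continuity_2d_pt_ext_loc; [| apply (plane_cont (pd c1 (pd c2 f))); auto; apply cl_pd; auto].
    exists (mkposreal del Hdel). simpl. intros u v Hu1 Hv1. symmetry. apply M1; auto.
  - eapply continuity_2d_pt_ext_loc; [| apply (plane_cont (pd c2 (pd c1 f))); auto; apply cl_pd; auto].
    exists (mkposreal del Hdel). simpl. intros u v Hu1 Hv1. symmetry. apply M2; auto.
Qed.

End Schwarz.

Lemma sum_scal_l c (a : nat -> R) N : c * sum_f_R0 a N = sum_f_R0 (fun i => c * a i) N.
Proof. induction N; simpl; [reflexivity | rewrite <- IHN; ring]. Qed.

Lemma sum_scal_r c (a : nat -> R) N : sum_f_R0 a N * c = sum_f_R0 (fun i => a i * c) N.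
Proof. induction N; simpl; [reflexivity | rewrite <- IHN; ring]. Qed.

Lemma sum_exch (g : nat -> nat -> R) N M :
  sum_f_R0 (fun j => sum_f_R0 (fun i => g i j) N) M =
  sum_f_R0 (fun i => sum_f_R0 (fun j => g i j) M) N.
Proof. induction M; simpl; [reflexivity | rewrite IHM, <- sum_plus; reflexivity]. Qed.

Lemma sum_delta (a : nat -> R) k N :
  sum_f_R0 (fun j => a j * (if Nat.eqb k j then 1 else 0)) N = if Nat.leb k N then a k else 0.
Proof.
  induction N; simpl.
  - destruct k; simpl; ring.
  - rewrite IHN. destruct (Nat.eqb_spec k (S N)) as [->|Hk].
    + rewrite (proj2 (Nat.leb_nle (S N) N)), Nat.leb_refl by lia. ring.
    + destruct (Nat.leb_spec k N); destruct (Nat.leb_spec k (S N)); try lia; ring.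
Qed.

Lemma sum_nonneg (a : nat -> R) N : (forall i, (i <= N)%nat -> 0 <= a i) -> 0 <= sum_f_R0 a N.
Proof.
  intro H. induction N; simpl; [apply H; lia |].
  assert (0 <= a (S N)) by (apply H; lia).
  assert (0 <= sum_f_R0 a N) by (apply IHN; intros; apply H; lia). lra.
Qed.

Lemma sum_le_one (a : nat -> R) N j : (forall i, (i <= N)%nat -> 0 <= a i) -> (j <= N)%nat ->
  a j <= sum_f_R0 a N.
Proof.
  intros H Hj. induction N; simpl.
  - replace j with 0%nat by lia. lra.
  - assert (0 <= a (S N)) by (apply H; lia).
    destruct (Nat.eq_dec j (S N)) as [->|Hne].
    + assert (0 <= sum_f_R0 a N) by (apply sum_nonneg; intros; apply H; lia). lra.
    + assert (a j <= sum_f_R0 a N) by (apply IHN; [intros; apply H |]; lia). lra.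
Qed.

Lemma px_high k f i t xs : jet_order k f -> (k < i)%nat -> px i f t xs = 0.
Proof.
  intros H Hi. unfold px.
  replace (fun s => f t (upd xs i s)) with (fun _ : R => f t xs); [apply Deriv_const |].
  apply functional_extensionality; intro s. apply H. intros j Hj. rewrite upd_neq; auto; lia.
Qed.

Lemma jet_order_pd k f c : jet_order k f -> jet_order k (pd c f).
Proof.
  intros H t xs ys E. destruct c as [i|]; simpl.
  - destruct (Compare_dec.le_lt_dec i k) as [Hi|Hi]; [| rewrite !(px_high k f i); auto].
    unfold px. rewrite (E i Hi). f_equal. apply functional_extensionality; intro s.
    apply H. intros j Hj. unfold upd. destruct (Nat.eqb j i); auto.
  - unfold pt. f_equal. apply functional_extensionality; intro s. apply H; auto.
Qed.

Lemma jet_order_Dt k K f : jet_order k f -> jet_order (S k) (Dt K f).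
Proof.
  intros H t xs ys E. unfold Dt.
  assert (Ht : pt f t xs = pt f t ys) by (apply (jet_order_pd k f None H); intros; apply E; lia).
  rewrite Ht. f_equal.
  apply sum_eq. intros i _. destruct (Compare_dec.le_lt_dec i k) as [Hi|Hi].
  - assert (Hx : px i f t xs = px i f t ys)
      by (apply (jet_order_pd k f (Some i) H); intros; apply E; lia).
    rewrite (E (S i)), Hx by lia. reflexivity.
  - rewrite !(px_high k f i); auto. ring.
Qed.

Lemma Dt_order0 K z t xs : jet_order 0 z -> Dt K z t xs = pt z t xs + xs 1%nat * px 0 z t xs.
Proof.
  intro Hz. unfold Dt. f_equal. induction K; simpl; [reflexivity |].
  rewrite IHK, (px_high 0 z (S K)) by (auto; lia). ring.
Qed.

Lemma Dt_const K c t xs : Dt K (fun _ _ => c) t xs = 0.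
Proof.
  unfold Dt. rewrite (pd_const None c t xs : pt _ t xs = 0).
  rewrite sum_eq_R0 by (intros i _; rewrite (pd_const (Some i) c t xs : px i _ t xs = 0); ring).
  ring.
Qed.

Section TotalDerivative.

Variable U : R -> (nat -> R) -> Prop.
Hypothesis HU : open_sup U.

Definition sumJ (g : nat -> Jet) (K : nat) : Jet := fun t xs => sum_f_R0 (fun i => g i t xs) K.

Lemma cl_sum g K : (forall i, smooth_cl U (g i)) -> smooth_cl U (sumJ g K).
Proof.
  intro H. induction K.
  - apply (cl_ext U (g 0%nat)); [apply H | intros; reflexivity].
  - apply (cl_ext U (fun t xs => sumJ g K t xs + g (S K) t xs)); [apply cl_plus; auto |].
    intros; reflexivity.
Qed.

Lemma pd_sum g K c t xs : (forall i, smooth_cl U (g i)) -> U t xs ->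
  pd c (sumJ g K) t xs = sum_f_R0 (fun i => pd c (g i) t xs) K.
Proof.
  intros H Hu. induction K as [|K IHK].
  - apply (pd_ext U HU); [intros; reflexivity | exact Hu].
  - transitivity (pd c (fun t xs => sumJ g K t xs + g (S K) t xs) t xs);
      [apply (pd_ext U HU); [intros; reflexivity | exact Hu] |].
    rewrite (pd_plus U HU), IHK; auto using cl_sum.
Qed.

Lemma Dt_sumJ K f : forall t xs,
  Dt K f t xs = (fun t xs => pd None f t xs + sumJ (fun i t xs => xs (S i) * pd (Some i) f t xs) K t xs) t xs.
Proof. reflexivity. Qed.

Lemma cl_Dt f K : smooth_cl U f -> smooth_cl U (Dt K f).
Proof.
  intro H. eapply cl_ext; [| intros; symmetry; apply Dt_sumJ].
  apply cl_plus; [apply (cl_pd U HU); auto |].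
  apply cl_sum. intro i. apply cl_mult; [apply cl_coord | apply (cl_pd U HU); auto].
Qed.

Lemma pd_Dt f K c t xs : smooth_cl U f -> U t xs ->
  pd c (Dt K f) t xs = pd c (pt f) t xs +
    sum_f_R0 (fun i => dcoord c (S i) * px i f t xs + xs (S i) * pd c (px i f) t xs) K.
Proof.
  intros H Hu.
  assert (C1 : smooth_cl U (pd None f)) by (apply (cl_pd U HU); auto).
  assert (C2 : forall i, smooth_cl U (fun t xs => xs (S i) * pd (Some i) f t xs)).
  { intro i; apply cl_mult; [apply cl_coord | apply (cl_pd U HU); auto]. }
  rewrite (pd_ext U HU _ _ c t xs (fun t xs _ => Dt_sumJ K f t xs) Hu).
  rewrite (pd_plus U HU), (pd_sum) by auto using cl_sum. f_equal.
  apply sum_eq. intros i _. rewrite (pd_mult U HU), pd_coord by auto using cl_coord, cl_pd.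
  reflexivity.
Qed.

Lemma Dt_opp K g t xs : smooth_cl U g -> U t xs -> Dt K (fun t xs => - g t xs) t xs = - Dt K g t xs.
Proof.
  intros Hg Hu.
  assert (Hn : forall c, pd c (fun t xs => - g t xs) t xs = - pd c g t xs).
  { intro c. rewrite (pd_ext U HU _ (fun t xs => (fun _ _ => -1) t xs * g t xs)) by
      (try assumption; intros; cbv beta; ring).
    rewrite (pd_mult U HU), pd_const by (auto; apply cl_const). ring. }
  unfold Dt. rewrite (Hn None : pt _ t xs = - pt g t xs), Ropp_plus_distr. f_equal.
  transitivity (-1 * sum_f_R0 (fun i => xs (S i) * px i g t xs) K); [| ring].
  rewrite sum_scal_l. apply sum_eq. intros i _. rewrite (Hn (Some i) : px i _ t xs = - px i g t xs). ring.
Qed.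

End TotalDerivative.

Section DtCalculus.

Variable U : R -> (nat -> R) -> Prop.
Hypothesis HU : open_sup U.
Variable K : nat.

Lemma Dt_plus f g t xs : smooth_cl U f -> smooth_cl U g -> U t xs ->
  Dt K (fun t xs => f t xs + g t xs) t xs = Dt K f t xs + Dt K g t xs.
Proof.
  intros Hf Hg Hu. unfold Dt.
  assert (E0 := pd_plus U HU f g None t xs Hf Hg Hu). simpl in E0. rewrite E0.
  assert (E : sum_f_R0 (fun i => xs (S i) * px i (fun t xs => f t xs + g t xs) t xs) K =
              sum_f_R0 (fun i => xs (S i) * px i f t xs) K + sum_f_R0 (fun i => xs (S i) * px i g t xs) K).
  { rewrite <- sum_plus. apply sum_eq. intros i _.
    assert (Ei := pd_plus U HU f g (Some i) t xs Hf Hg Hu). simpl in Ei. rewrite Ei. ring. }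
  rewrite E. ring.
Qed.

Lemma Dt_mult f g t xs : smooth_cl U f -> smooth_cl U g -> U t xs ->
  Dt K (fun t xs => f t xs * g t xs) t xs = Dt K f t xs * g t xs + f t xs * Dt K g t xs.
Proof.
  intros Hf Hg Hu. unfold Dt.
  assert (E0 := pd_mult U HU f g None t xs Hf Hg Hu). simpl in E0. rewrite E0.
  assert (E : sum_f_R0 (fun i => xs (S i) * px i (fun t xs => f t xs * g t xs) t xs) K =
              sum_f_R0 (fun i => xs (S i) * px i f t xs) K * g t xs
              + f t xs * sum_f_R0 (fun i => xs (S i) * px i g t xs) K).
  { rewrite sum_scal_r, sum_scal_l, <- sum_plus. apply sum_eq. intros i _.
    assert (Ei := pd_mult U HU f g (Some i) t xs Hf Hg Hu). simpl in Ei. rewrite Ei. ring. }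
  rewrite E. ring.
Qed.

Lemma Dt_ext f g t xs : (forall t xs, U t xs -> f t xs = g t xs) -> U t xs ->
  Dt K f t xs = Dt K g t xs.
Proof.
  intros E Hu. unfold Dt.
  assert (E0 := pd_ext U HU f g None t xs E Hu). simpl in E0. rewrite E0. f_equal.
  apply sum_eq. intros i _. assert (Ei := pd_ext U HU f g (Some i) t xs E Hu). simpl in Ei.
  rewrite Ei. reflexivity.
Qed.

Lemma Dt_sum g N t xs : (forall i, smooth_cl U (g i)) -> U t xs ->
  Dt K (sumJ g N) t xs = sum_f_R0 (fun j => Dt K (g j) t xs) N.
Proof.
  intros Hg Hu. induction N as [|N IHN].
  - apply Dt_ext; [intros; reflexivity | exact Hu].
  - change (sumJ g (S N)) with (fun t xs => sumJ g N t xs + g (S N) t xs).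
    rewrite Dt_plus, IHN by auto using cl_sum. reflexivity.
Qed.

(* The commutation rules [d_t, D_t] = 0 and [d_{x_j}, D_t] = d_{x_{j-1}},
   which rest on the symmetry of second derivatives. *)
Lemma pt_Dt f t xs : smooth_cl U f -> U t xs -> pt (Dt K f) t xs = Dt K (pt f) t xs.
Proof.
  intros Hf Hu. assert (E := pd_Dt U HU f K None t xs Hf Hu).
  cbv beta iota delta [pd dcoord] in E. rewrite E. unfold Dt. f_equal.
  apply sum_eq. intros i _.
  rewrite (cl_schwarz U HU f (Some i) None t xs Hf Hu : px i (pt f) t xs = pt (px i f) t xs).
  ring.
Qed.

Lemma px_Dt f j t xs : smooth_cl U f -> U t xs ->
  px j (Dt K f) t xs =
  sum_f_R0 (fun i => (if Nat.eqb (S i) j then 1 else 0) * px i f t xs) K + Dt K (px j f) t xs.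
Proof.
  intros Hf Hu. assert (E := pd_Dt U HU f K (Some j) t xs Hf Hu).
  cbv beta iota delta [pd dcoord] in E. rewrite E. unfold Dt.
  rewrite (cl_schwarz U HU f (Some j) None t xs Hf Hu : px j (pt f) t xs = pt (px j f) t xs).
  assert (E2 : sum_f_R0 (fun i => (if Nat.eqb (S i) j then 1 else 0) * px i f t xs
                                   + xs (S i) * px j (px i f) t xs) K =
               sum_f_R0 (fun i => (if Nat.eqb (S i) j then 1 else 0) * px i f t xs) K
               + sum_f_R0 (fun i => xs (S i) * px i (px j f) t xs) K).
  { rewrite <- sum_plus. apply sum_eq. intros i _.
    change (px j (px i f) t xs) with (pd (Some j) (pd (Some i) f) t xs).
    rewrite (cl_schwarz U HU f (Some j) (Some i)) by auto. reflexivity. }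
  rewrite E2. ring.
Qed.

End DtCalculus.

(** * Algebra of the lambda-prolongation *)

Section LambdaProlongation.

Variable U : R -> (nat -> R) -> Prop.
Hypothesis HU : open_sup U.
Variable K : nat.
Variables rho phi0 lam : Jet.

Local Notation V := (lam_prol K rho phi0 lam).
Local Notation P := (phi_lam K rho phi0 lam).

Lemma lam_prol_mult k g h t xs : smooth_cl U g -> smooth_cl U h -> U t xs ->
  V k (fun t xs => g t xs * h t xs) t xs = V k g t xs * h t xs + g t xs * V k h t xs.
Proof.
  intros Hg Hh Hu. unfold lam_prol.
  assert (E0 := pd_mult U HU g h None t xs Hg Hh Hu). simpl in E0. rewrite E0.
  assert (E : sum_f_R0 (fun i => P i t xs * px i (fun t xs => g t xs * h t xs) t xs) k =
              sum_f_R0 (fun i => P i t xs * px i g t xs) k * h t xs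
              + g t xs * sum_f_R0 (fun i => P i t xs * px i h t xs) k).
  { rewrite sum_scal_r, sum_scal_l, <- sum_plus. apply sum_eq. intros i _.
    assert (Ei := pd_mult U HU g h (Some i) t xs Hg Hh Hu). simpl in Ei. rewrite Ei. ring. }
  rewrite E. ring.
Qed.

Lemma lam_prol_inv k h t xs : smooth_cl U h -> (forall t xs, U t xs -> h t xs <> 0) -> U t xs ->
  V k (fun t xs => / h t xs) t xs = - V k h t xs * (/ h t xs * / h t xs).
Proof.
  intros Hh Hnz Hu. unfold lam_prol.
  assert (E0 := pd_inv U HU h None t xs Hh Hnz Hu). simpl in E0. rewrite E0.
  rewrite (sum_eq _ (fun i => P i t xs * px i h t xs * - (/ h t xs * / h t xs))), <- sum_scal_r;
    [ring |].
  intros i _. assert (Ei := pd_inv U HU h (Some i) t xs Hh Hnz Hu). simpl in Ei. rewrite Ei. ring.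
Qed.

Lemma lam_prol_quot k g h a t xs : smooth_cl U g -> smooth_cl U h ->
  (forall t xs, U t xs -> h t xs <> 0) -> U t xs ->
  V k g t xs = a * g t xs -> V k h t xs = a * h t xs ->
  V k (fun t xs => g t xs / h t xs) t xs = 0.
Proof.
  intros Hg Hh Hnz Hu E1 E2.
  change (fun t xs => g t xs / h t xs) with (fun t xs => g t xs * (fun t xs => / h t xs) t xs).
  rewrite lam_prol_mult, lam_prol_inv, E1, E2 by auto using cl_inv.
  assert (h t xs <> 0) by auto. field. auto.
Qed.

Lemma lam_prol_order k d f m t xs : jet_order m f -> (m <= k)%nat -> V k f t xs = V (k + d) f t xs.
Proof.
  intros Hm Hk. induction d; [rewrite Nat.add_0_r; reflexivity |].
  rewrite IHd. unfold lam_prol. rewrite Nat.add_succ_r. simpl (sum_f_R0 _ (S _)).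
  rewrite (px_high m f (S (k + d))) by (auto; lia). ring.
Qed.

Hypotheses (Hrho : smooth_cl U rho) (Hphi0 : smooth_cl U phi0) (Hlam : smooth_cl U lam).

Lemma cl_phi_lam i : smooth_cl U (P i).
Proof.
  induction i; simpl; auto.
  assert (CD := cl_Dt U HU).
  apply cl_plus; [apply cl_minus | apply cl_mult; [| apply cl_minus]]; auto using cl_mult, cl_coord.
Qed.

(* V (D_t f) = rho D_t(f_t) + sum_j phi_j D_t(f_j) + sum_i phi_{i+1} f_i,
   from [d_{x_j}, D_t] = d_{x_{j-1}}. *)
Lemma lam_prol_Dt_expand f m t xs : smooth_cl U f -> jet_order m f -> (m < K)%nat -> U t xs ->
  V K (Dt K f) t xs = rho t xs * Dt K (pt f) t xs
    + sum_f_R0 (fun j => P j t xs * Dt K (px j f) t xs) K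
    + sum_f_R0 (fun i => P (S i) t xs * px i f t xs) K.
Proof.
  intros Hf Hm HmK Hu. unfold lam_prol. rewrite (pt_Dt U HU K) by auto.
  assert (E : sum_f_R0 (fun j => P j t xs * px j (Dt K f) t xs) K =
      sum_f_R0 (fun j => sum_f_R0 (fun i => P j t xs *
                 ((if Nat.eqb (S i) j then 1 else 0) * px i f t xs)) K) K
      + sum_f_R0 (fun j => P j t xs * Dt K (px j f) t xs) K).
  { rewrite <- sum_plus. apply sum_eq. intros j _.
    rewrite (px_Dt U HU K), Rmult_plus_distr_l, sum_scal_l by auto. reflexivity. }
  rewrite E, (sum_exch (fun i j => P j t xs * ((if Nat.eqb (S i) j then 1 else 0) * px i f t xs))).
  enough (sum_f_R0 (fun i => sum_f_R0 (fun j => P j t xs *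
      ((if Nat.eqb (S i) j then 1 else 0) * px i f t xs)) K) K =
      sum_f_R0 (fun i => P (S i) t xs * px i f t xs) K) as -> by ring.
  apply sum_eq. intros i Hi.
  rewrite (sum_eq _ (fun j => px i f t xs * (P j t xs * (if Nat.eqb (S i) j then 1 else 0))))
    by (intros; ring).
  rewrite <- sum_scal_l, sum_delta. destruct (Nat.leb_spec (S i) K); [ring |].
  replace i with K by lia. rewrite (px_high m f K) by auto. ring.
Qed.

Lemma Dt_lam_prol f t xs : smooth_cl U f -> U t xs ->
  Dt K (V K f) t xs = Dt K rho t xs * pt f t xs + rho t xs * Dt K (pt f) t xs
    + sum_f_R0 (fun j => Dt K (P j) t xs * px j f t xs + P j t xs * Dt K (px j f) t xs) K.
Proof.
  intros Hf Hu.
  assert (CP := cl_phi_lam).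
  assert (Cft : smooth_cl U (pt f)) by exact (cl_pd U HU f None Hf).
  assert (Cfx : forall j, smooth_cl U (px j f)) by (intro j; exact (cl_pd U HU f (Some j) Hf)).
  change (V K f) with (fun t xs => (fun t xs => rho t xs * pt f t xs) t xs
                       + sumJ (fun j t xs => P j t xs * px j f t xs) K t xs).
  rewrite (Dt_plus U HU), (Dt_mult U HU), (Dt_sum U HU) by auto using cl_mult, cl_sum.
  f_equal. apply sum_eq. intros j _. apply (Dt_mult U HU); auto.
Qed.

Lemma lam_prol_Dt f m t xs : smooth_cl U f -> jet_order m f -> (m < K)%nat -> U t xs ->
  V K (Dt K f) t xs = Dt K (V K f) t xs + lam t xs * V K f t xs
                      - (Dt K rho t xs + lam t xs * rho t xs) * Dt K f t xs.
Proof.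
  intros Hf Hm HmK Hu.
  rewrite (lam_prol_Dt_expand f m), Dt_lam_prol by auto.
  assert (ED : Dt K f t xs = pt f t xs + sum_f_R0 (fun i => xs (S i) * px i f t xs) K)
    by reflexivity.
  assert (EP : sum_f_R0 (fun i => P (S i) t xs * px i f t xs) K =
      sum_f_R0 (fun i => Dt K (P i) t xs * px i f t xs) K
      - Dt K rho t xs * sum_f_R0 (fun i => xs (S i) * px i f t xs) K
      + lam t xs * sum_f_R0 (fun i => P i t xs * px i f t xs) K
      - lam t xs * rho t xs * sum_f_R0 (fun i => xs (S i) * px i f t xs) K).
  { rewrite !sum_scal_l, <- !minus_sum, <- !sum_plus, <- minus_sum.
    apply sum_eq. intros i _. simpl. ring. }
  rewrite ED, EP. unfold lam_prol. rewrite !sum_plus. ring.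
Qed.

Lemma lam_prol_Dt_invariant f m t xs : smooth_cl U f -> jet_order m f -> (m < K)%nat -> U t xs ->
  (forall t xs, U t xs -> V K f t xs = 0) ->
  V K (Dt K f) t xs = - (Dt K rho t xs + lam t xs * rho t xs) * Dt K f t xs.
Proof.
  intros Hf Hm HmK Hu Hinv.
  rewrite (lam_prol_Dt f m), (Dt_ext U HU K _ (fun _ _ => 0)), Dt_const, Hinv by auto.
  ring.
Qed.

End LambdaProlongation.

(** * The sequence zeta_k and its invariance *)

Lemma zeta_seq_order K z zeta k : jet_order 0 z -> jet_order 1 zeta ->
  jet_order (S k) (zeta_seq K z zeta k).
Proof.
  intros Hz Hze. induction k; simpl; auto.
  intros t xs ys E. rewrite (jet_order_Dt (S k) K _ IHk t xs ys E).
  rewrite (jet_order_Dt 0 K z Hz t xs ys) by (intros; apply E; lia). reflexivity.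
Qed.

Section ZetaSequence.

Variable U : R -> (nat -> R) -> Prop.
Hypothesis HU : open_sup U.
Variable K : nat.
Variables z zeta : Jet.
Hypotheses (Hz : smooth_cl U z) (Hze : smooth_cl U zeta).
Hypotheses (Hoz : jet_order 0 z) (Hoze : jet_order 1 zeta).
Hypothesis HDz : forall t xs, U t xs -> Dt K z t xs <> 0.

Local Notation Z := (zeta_seq K z zeta).

Lemma cl_zeta_seq k : smooth_cl U (Z k).
Proof.
  induction k; simpl; auto.
  assert (CD := cl_Dt U HU).
  apply (cl_ext U (fun t xs => Dt K (Z k) t xs * / Dt K z t xs)); [| intros; reflexivity].
  apply cl_mult; [| apply cl_inv]; auto.
Qed.

Lemma px_zeta_succ k t xs : (S k <= K)%nat -> U t xs ->
  px (S (S k)) (Z (S k)) t xs = px (S k) (Z k) t xs / Dt K z t xs.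
Proof.
  intros Hk Hu.
  assert (CD := cl_Dt U HU).
  assert (Hinv : jet_order 1 (fun t xs => / Dt K z t xs)).
  { intros t' xs' ys E. rewrite (jet_order_Dt 0 K z Hoz t' xs' ys E). reflexivity. }
  change (Z (S k)) with (fun t xs => Dt K (Z k) t xs * / Dt K z t xs).
  assert (E0 := pd_mult U HU _ _ (Some (S (S k))) t xs (CD _ K (cl_zeta_seq k))
                  (cl_inv U _ (CD _ K Hz) HDz) Hu).
  simpl in E0. rewrite E0, (px_high 1 _ (S (S k)) t xs Hinv) by lia.
  rewrite (px_Dt U HU K) by (auto; apply cl_zeta_seq).
  rewrite (Dt_ext U HU K _ (fun _ _ => 0)), Dt_const
    by (auto; intros; apply (px_high (S k)); auto using zeta_seq_order).
  rewrite (sum_eq _ (fun i => px i (Z k) t xs * (if Nat.eqb (S k) i then 1 else 0))), sum_delta.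
  - rewrite (proj2 (Nat.leb_le (S k) K)) by lia. unfold Rdiv. ring.
  - intros i _. destruct (Nat.eqb_spec (S i) (S (S k))), (Nat.eqb_spec (S k) i); try lia; ring.
Qed.

Lemma px_zeta_nonzero k t xs : (k < K)%nat -> (forall t xs, U t xs -> px 1 zeta t xs <> 0) ->
  U t xs -> px (S k) (Z k) t xs <> 0.
Proof.
  intros Hk H1 Hu. induction k; [simpl; auto |].
  rewrite px_zeta_succ by (auto; lia). unfold Rdiv.
  apply Rmult_integral_contrapositive. split; [apply IHk; lia | apply Rinv_neq_0_compat; auto].
Qed.

Variables rho phi0 lam : Jet.
Hypotheses (Hrho : smooth_cl U rho) (Hphi0 : smooth_cl U phi0) (Hlam : smooth_cl U lam).

Local Notation V := (lam_prol K rho phi0 lam K).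

(* If V kills z and zeta, it kills every zeta_k, k < K: V scales D_t zeta_k
   and D_t z by the same factor. *)
Lemma zeta_seq_invariant k : (k < K)%nat ->
  (forall t xs, U t xs -> V z t xs = 0) -> (forall t xs, U t xs -> V zeta t xs = 0) ->
  forall t xs, U t xs -> V (Z k) t xs = 0.
Proof.
  intros Hk Xz Xze. assert (CD := cl_Dt U HU).
  induction k; intros t xs Hu; [exact (Xze t xs Hu) |].
  apply (lam_prol_quot U HU K rho phi0 lam K _ _ (- (Dt K rho t xs + lam t xs * rho t xs)));
    auto using cl_zeta_seq.
  - apply (lam_prol_Dt_invariant U HU K rho phi0 lam Hrho Hphi0 Hlam _ (S k));
      auto using cl_zeta_seq, zeta_seq_order.
    intros; apply IHk; auto; lia.
  - apply (lam_prol_Dt_invariant U HU K rho phi0 lam Hrho Hphi0 Hlam _ 0); auto. lia.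
Qed.

End ZetaSequence.

Definition sym_rho (z : Jet) : Jet := fun t xs => - px 0 z t xs.
Definition sym_phi0 (z : Jet) : Jet := fun t xs => pt z t xs.
Definition sym_lam (K : nat) (z zeta : Jet) : Jet := fun t xs =>
  (px 0 z t xs * pt zeta t xs - pt z t xs * px 0 zeta t xs) / (Dt K z t xs * px 1 zeta t xs)
  - (Dt K (pt z) t xs + Dt K (px 0 z) t xs * xs 1%nat) / Dt K z t xs.

(* z is an invariant of X^[lambda,(1)] (for any lambda): X z = -z_x z_t + z_t z_x. *)
Lemma sym_kills_z K lam z t xs : jet_order 0 z ->
  lam_prol K (sym_rho z) (sym_phi0 z) lam 1 z t xs = 0.
Proof.
  intro Hoz. unfold lam_prol. simpl. rewrite (px_high 0 z 1) by (auto; lia).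
  unfold sym_rho, sym_phi0. ring.
Qed.

Section ExplicitSymmetry.

Variable U : R -> (nat -> R) -> Prop.
Hypothesis HU : open_sup U.
Variable K : nat.
Variables z zeta : Jet.
Hypotheses (Hz : smooth_cl U z) (Hze : smooth_cl U zeta) (Hoz : jet_order 0 z).
Hypothesis Hzeta1 : forall t xs, U t xs -> px 1 zeta t xs <> 0.
Hypothesis HDz : forall t xs, U t xs -> Dt K z t xs <> 0.

Lemma cl_sym_rho : smooth_cl U (sym_rho z).
Proof.
  apply (cl_ext U (fun t xs => (fun _ _ => 0) t xs - pd (Some 0%nat) z t xs)).
  - apply cl_minus; [apply cl_const | apply (cl_pd U HU); auto].
  - intros; unfold sym_rho; simpl; ring.
Qed.

Lemma cl_sym_phi0 : smooth_cl U (sym_phi0 z).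
Proof. apply (cl_ext U (pd None z)); [apply (cl_pd U HU); auto | intros; reflexivity]. Qed.

Lemma cl_sym_lam : smooth_cl U (sym_lam K z zeta).
Proof.
  assert (CD := cl_Dt U HU). assert (CP := cl_pd U HU).
  apply (cl_ext U (fun t xs =>
     (pd (Some 0%nat) z t xs * pd None zeta t xs - pd None z t xs * pd (Some 0%nat) zeta t xs)
       * / (Dt K z t xs * pd (Some 1%nat) zeta t xs)
     - (Dt K (pd None z) t xs + Dt K (pd (Some 0%nat) z) t xs * xs 1%nat) * / Dt K z t xs));
    [| intros; reflexivity].
  apply cl_minus; apply cl_mult.
  - apply cl_minus; apply cl_mult; auto.
  - apply cl_inv; [apply cl_mult; auto |].
    intros t xs Hu. apply Rmult_integral_contrapositive. split; auto. exact (Hzeta1 t xs Hu).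
  - apply cl_plus; [| apply cl_mult]; auto using cl_coord.
  - apply cl_inv; auto.
Qed.

(* zeta is an invariant of X^[lambda,(1)]: this is what determines lambda. *)
Lemma sym_kills_zeta t xs : U t xs ->
  lam_prol K (sym_rho z) (sym_phi0 z) (sym_lam K z zeta) 1 zeta t xs = 0.
Proof.
  intro Hu. unfold lam_prol. simpl.
  assert (ER : Dt K (sym_rho z) t xs = - Dt K (px 0 z) t xs)
    by exact (Dt_opp U HU K (px 0 z) t xs (cl_pd U HU z (Some 0%nat) Hz) Hu).
  change (Dt K (sym_phi0 z) t xs) with (Dt K (pt z) t xs). rewrite ER.
  assert (D0 := HDz t xs Hu). assert (Z1 := Hzeta1 t xs Hu).
  unfold sym_lam. rewrite (Dt_order0 K z t xs Hoz) in *. unfold sym_rho, sym_phi0.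
  field. auto.
Qed.

End ExplicitSymmetry.

Definition dlin (f : Jet) (m : nat) t xs (dt : R) (dx : nat -> R) : R :=
  pt f t xs * dt + sum_f_R0 (fun i => px i f t xs * dx i) m.
Definition l1 (m : nat) (dt : R) (dx : nat -> R) : R :=
  Rabs dt + sum_f_R0 (fun i => Rabs (dx i)) m.

Lemma l1_nonneg m dt dx : 0 <= l1 m dt dx.
Proof.
  unfold l1. assert (0 <= Rabs dt) by apply Rabs_pos.
  assert (0 <= sum_f_R0 (fun i => Rabs (dx i)) m) by (apply sum_nonneg; intros; apply Rabs_pos).
  lra.
Qed.

Lemma finite_delta (P : nat -> R -> Prop) m :
  (forall j d d', 0 < d' <= d -> P j d -> P j d') ->
  (forall j, (j <= m)%nat -> exists d, 0 < d /\ P j d) ->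
  exists d, 0 < d /\ forall j, (j <= m)%nat -> P j d.
Proof.
  intros Hmono H. induction m.
  - destruct (H 0%nat (le_n 0)) as [d [Hd Hp]]. exists d. split; auto.
    intros j Hj. replace j with 0%nat by lia. auto.
  - destruct IHm as [d1 [Hd1 H1]]; [intros j Hj; apply H; lia |].
    destruct (H (S m) (le_n _)) as [d2 [Hd2 H2]].
    assert (Hm1 := Rmin_l d1 d2). assert (Hm2 := Rmin_r d1 d2).
    assert (Hmin : 0 < Rmin d1 d2) by (apply Rmin_pos; auto).
    exists (Rmin d1 d2). split; auto. intros j Hj.
    destruct (Nat.eq_dec j (S m)) as [->|Hne].
    + apply (Hmono _ d2); auto.
    + apply (Hmono _ d1); [lra | apply H1; lia].
Qed.

Lemma increment_bound (g g' : R -> R) a b D eps :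
  (forall c, Rabs (c - a) <= Rabs (b - a) -> derivable_pt_lim g c (g' c) /\ Rabs (g' c - D) < eps) ->
  Rabs (g b - g a - D * (b - a)) <= eps * Rabs (b - a).
Proof.
  intro H. destruct (mean_value g g' a b (fun c Hc => proj1 (H c Hc))) as [c [Hc E]].
  rewrite E. replace (g' c * (b - a) - D * (b - a)) with ((g' c - D) * (b - a)) by ring.
  rewrite Rabs_mult. apply Rmult_le_compat_r; [apply Rabs_pos | left; apply H; auto].
Qed.

Lemma telescope_bound (a : nat -> R) (d w : nat -> R) eps m :
  (forall j, (j <= m)%nat -> Rabs (a (S j) - a j - d j) <= eps * w j) ->
  Rabs (a (S m) - a 0%nat - sum_f_R0 d m) <= eps * sum_f_R0 w m.
Proof.
  intro H. induction m; simpl; [apply H; lia |].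
  replace (a (S (S m)) - a 0%nat - (sum_f_R0 d m + d (S m)))
    with ((a (S m) - a 0%nat - sum_f_R0 d m) + (a (S (S m)) - a (S m) - d (S m))) by ring.
  eapply Rle_trans; [apply Rabs_triang |].
  assert (H1 := IHm (fun j Hj => H j ltac:(lia))). assert (H2 := H (S m) (le_n _)). lra.
Qed.

Definition mix (j : nat) (xs ys : nat -> R) : nat -> R := fun i => if Nat.ltb i j then ys i else xs i.

Section FirstOrder.

Variable U : R -> (nat -> R) -> Prop.
Hypothesis HU : open_sup U.

Definition partials_close (f : Jet) (m : nat) t xs (eps del : R) : Prop :=
  forall t' ys, Rabs (t' - t) < del -> (forall i, Rabs (ys i - xs i) < del) ->
    U t' ys /\ Rabs (pt f t' ys - pt f t xs) < eps /\
    forall j, (j <= m)%nat -> Rabs (px j f t' ys - px j f t xs) < eps.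

Lemma partials_close_exists f m t xs eps : smooth_cl U f -> U t xs -> 0 < eps ->
  exists del, 0 < del /\ partials_close f m t xs eps del.
Proof.
  intros Hf Hu Heps.
  destruct (HU t xs Hu) as [d0 [Hd0 H0]].
  destruct (cl_cont U HU (pd None f) t xs (cl_pd U HU f None Hf) Hu eps Heps) as [d1 [Hd1 H1]].
  destruct (finite_delta (fun j d => forall t' ys, Rabs (t' - t) < d ->
      (forall i, Rabs (ys i - xs i) < d) -> Rabs (px j f t' ys - px j f t xs) < eps) m)
    as [d2 [Hd2 H2]].
  { intros j d d' Hd' Hp t' ys Ht Hy. apply Hp; [lra | intro i; specialize (Hy i); lra]. }
  { intros j _. apply (cl_cont U HU (pd (Some j) f) t xs (cl_pd U HU f (Some j) Hf) Hu eps Heps). }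
  exists (Rmin d0 (Rmin d1 d2)).
  assert (Hm0 := Rmin_l d0 (Rmin d1 d2)). assert (Hm := Rmin_r d0 (Rmin d1 d2)).
  assert (Hm1 := Rmin_l d1 d2). assert (Hm2 := Rmin_r d1 d2).
  split; [repeat apply Rmin_pos; auto |]. intros t' ys Ht Hy.
  repeat split; [apply H0 | apply H1 | intros j Hj; apply H2]; auto; try lra;
    intro i; specialize (Hy i); lra.
Qed.

Lemma time_increment f m t xs eps del t' : smooth_cl U f -> partials_close f m t xs eps del ->
  Rabs (t' - t) < del -> Rabs (f t' xs - f t xs - pt f t xs * (t' - t)) <= eps * Rabs (t' - t).
Proof.
  intros Hf Hbox Ht. apply (increment_bound (fun s => f s xs) (fun s => pt f s xs)). intros c Hc.
  assert (Hclose : forall i, Rabs (xs i - xs i) < del).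
  { intro. rewrite Rminus_diag, Rabs_R0. apply Rle_lt_trans with (Rabs (t' - t)); auto. apply Rabs_pos. }
  destruct (Hbox c xs ltac:(lra) Hclose) as [HUq [Hpt _]].
  split; [exact (cl_pd_spec U HU f None c xs Hf HUq) | exact Hpt].
Qed.

Lemma coordinate_increment f m t xs eps del t' ys j : smooth_cl U f -> partials_close f m t xs eps del ->
  Rabs (t' - t) < del -> (forall i, (i <= m)%nat -> Rabs (ys i - xs i) < del) -> (j <= m)%nat ->
  Rabs (f t' (mix (S j) xs ys) - f t' (mix j xs ys) - px j f t xs * (ys j - xs j))
    <= eps * Rabs (ys j - xs j).
Proof.
  intros Hf Hbox Ht Hy Hj.
  replace (mix (S j) xs ys) with (upd (mix j xs ys) j (ys j))
    by (apply functional_extensionality; intro i; unfold mix, upd;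
        destruct (Nat.ltb_spec i (S j)), (Nat.eqb_spec i j), (Nat.ltb_spec i j); subst; auto; lia).
  replace (f t' (mix j xs ys)) with (f t' (upd (mix j xs ys) j (xs j)))
    by (f_equal; apply functional_extensionality; intro i; unfold mix, upd;
        destruct (Nat.eqb_spec i j), (Nat.ltb_spec i j); subst; auto; lia).
  apply (increment_bound (fun s => f t' (upd (mix j xs ys) j s))
                         (fun c => px j f t' (upd (mix j xs ys) j c))).
  intros c Hc.
  assert (Hclose : forall i, Rabs (upd (mix j xs ys) j c i - xs i) < del).
  { intro i. unfold upd, mix. destruct (Nat.eqb_spec i j) as [->|]; [specialize (Hy j Hj); lra |].
    destruct (Nat.ltb_spec i j); [apply Hy; lia | rewrite Rminus_diag, Rabs_R0].
    apply Rle_lt_trans with (Rabs (t' - t)); auto. apply Rabs_pos. }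
  destruct (Hbox t' _ Ht Hclose) as [HUq [_ Hpx]]. split; [| apply Hpx; auto].
  pose proof (cl_pd_spec U HU f (Some j) t' _ Hf HUq) as D. simpl in D.
  rewrite upd_eq in D. eapply derivable_ext; [exact D |]. intro s. cbv beta. rewrite upd_upd. reflexivity.
Qed.

(* Frechet differentiability: continuous partial derivatives give a
   first-order expansion in the coordinates t, x_0, ..., x_m. *)
Lemma cl_first_order f m t xs : smooth_cl U f -> jet_order m f -> U t xs ->
  forall eps, 0 < eps -> exists del, 0 < del /\ forall t' ys,
    Rabs (t' - t) < del -> (forall i, (i <= m)%nat -> Rabs (ys i - xs i) < del) ->
    Rabs (f t' ys - f t xs - dlin f m t xs (t' - t) (fun i => ys i - xs i))
      <= eps * l1 m (t' - t) (fun i => ys i - xs i).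
Proof.
  intros Hf Hm Hu eps Heps.
  destruct (partials_close_exists f m t xs eps Hf Hu Heps) as [del [Hdel Hbox]].
  exists del. split; auto. intros t' ys Ht Hy.
  assert (Time := time_increment f m t xs eps del t' Hf Hbox Ht).
  assert (Space := telescope_bound (fun j => f t' (mix j xs ys)) (fun j => px j f t xs * (ys j - xs j))
                   (fun j => Rabs (ys j - xs j)) eps m
                   (fun j Hj => coordinate_increment f m t xs eps del t' ys j Hf Hbox Ht Hy Hj)).
  assert (Hys : f t' ys = f t' (mix (S m) xs ys))
    by (apply Hm; intros i Hi; unfold mix; destruct (Nat.ltb_spec i (S m)); auto; lia).
  assert (Hxs : mix 0 xs ys = xs)
    by (apply functional_extensionality; intro i; unfold mix; destruct (Nat.ltb_spec i 0); auto; lia).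
  cbv beta in Space. rewrite Hxs in Space. rewrite Hys. unfold dlin, l1.
  replace (f t' (mix (S m) xs ys) - f t xs - (pt f t xs * (t' - t)
             + sum_f_R0 (fun i => px i f t xs * (ys i - xs i)) m))
    with ((f t' (mix (S m) xs ys) - f t' xs - sum_f_R0 (fun j => px j f t xs * (ys j - xs j)) m)
          + (f t' xs - f t xs - pt f t xs * (t' - t))) by ring.
  eapply Rle_trans; [apply Rabs_triang | lra].
Qed.

End FirstOrder.

Lemma dlin_affine f m t xs a b c (A B C : nat -> R) s r :
  dlin f m t xs (a + s * b + r * c) (fun i => A i + s * B i + r * C i) =
  dlin f m t xs a A + s * dlin f m t xs b B + r * dlin f m t xs c C.
Proof.
  unfold dlin.
  assert (E : sum_f_R0 (fun i => px i f t xs * (A i + s * B i + r * C i)) m =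
              sum_f_R0 (fun i => px i f t xs * A i) m + s * sum_f_R0 (fun i => px i f t xs * B i) m
              + r * sum_f_R0 (fun i => px i f t xs * C i) m).
  { rewrite !sum_scal_l, <- !sum_plus. apply sum_eq. intros; ring. }
  rewrite E. ring.
Qed.

Lemma l1_coord m dt dx : Rabs dt <= l1 m dt dx /\ forall i, (i <= m)%nat -> Rabs (dx i) <= l1 m dt dx.
Proof.
  unfold l1. assert (0 <= sum_f_R0 (fun i => Rabs (dx i)) m) by (apply sum_nonneg; intros; apply Rabs_pos).
  split; [lra |]. intros i Hi.
  assert (Rabs (dx i) <= sum_f_R0 (fun i => Rabs (dx i)) m)
    by (apply (sum_le_one (fun i => Rabs (dx i))); auto; intros; apply Rabs_pos).
  assert (0 <= Rabs dt) by apply Rabs_pos. lra.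
Qed.

Definition dnorm (f : Jet) (m : nat) t xs : R :=
  Rabs (pt f t xs) + sum_f_R0 (fun i => Rabs (px i f t xs)) m.

Lemma dnorm_nonneg f m t xs : 0 <= dnorm f m t xs.
Proof.
  unfold dnorm. assert (0 <= Rabs (pt f t xs)) by apply Rabs_pos.
  assert (0 <= sum_f_R0 (fun i => Rabs (px i f t xs)) m) by (apply sum_nonneg; intros; apply Rabs_pos).
  lra.
Qed.

Lemma dlin_bound f m t xs dt dx : Rabs (dlin f m t xs dt dx) <= dnorm f m t xs * l1 m dt dx.
Proof.
  destruct (l1_coord m dt dx) as [Ht Hx]. unfold dlin, dnorm.
  eapply Rle_trans; [apply Rabs_triang |]. rewrite Rabs_mult, Rmult_plus_distr_r.
  apply Rplus_le_compat; [apply Rmult_le_compat_l; auto; apply Rabs_pos |].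
  eapply Rle_trans; [apply sum_f_R0_triangle |]. rewrite sum_scal_r. apply sum_Rle.
  intros i Hi. rewrite Rabs_mult. apply Rmult_le_compat_l; auto. apply Rabs_pos.
Qed.

Lemma l1_affine m a b c (A B C : nat -> R) s r :
  l1 m (a + s * b + r * c) (fun i => A i + s * B i + r * C i) <=
  l1 m a A + Rabs s * l1 m b B + Rabs r * l1 m c C.
Proof.
  assert (Tri : forall x y z, Rabs (x + s * y + r * z) <= Rabs x + Rabs s * Rabs y + Rabs r * Rabs z).
  { intros x y z. rewrite <- !Rabs_mult.
    eapply Rle_trans; [apply Rabs_triang |]. assert (H := Rabs_triang x (s * y)). lra. }
  unfold l1. rewrite !Rmult_plus_distr_l, !sum_scal_l.
  assert (Hs := sum_Rle _ (fun i => Rabs (A i) + Rabs s * Rabs (B i) + Rabs r * Rabs (C i)) m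
                  (fun i _ => Tri (A i) (B i) (C i))).
  rewrite !sum_plus in Hs. specialize (Tri a b c). lra.
Qed.

Lemma l1_displacement m rt (rx : nat -> R) b (B : nat -> R) c (Cc : nat -> R) s r :
  l1 m rt rx <= Rabs s ->
  l1 m (rt + s * b + r * c) (fun i => rx i + s * B i + r * Cc i) <=
  (1 + l1 m b B + l1 m c Cc) * (Rabs s + Rabs r).
Proof.
  intro H. eapply Rle_trans; [apply l1_affine |].
  assert (0 <= Rabs s) by apply Rabs_pos. assert (0 <= Rabs r) by apply Rabs_pos.
  assert (0 <= l1 m b B) by apply l1_nonneg. assert (0 <= l1 m c Cc) by apply l1_nonneg.
  nra.
Qed.

Lemma small_factor K eps : 0 <= K -> 0 < eps -> exists e, 0 < e /\ e <= 1 /\ e * K <= eps.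
Proof.
  intros HK Heps. exists (Rmin 1 (eps / (K + 1))).
  assert (Hm1 := Rmin_l 1 (eps / (K + 1))). assert (Hm2 := Rmin_r 1 (eps / (K + 1))).
  assert (Hq : 0 < eps / (K + 1)) by (apply Rdiv_lt_0_compat; lra).
  split; [apply Rmin_pos; lra | split; [exact Hm1 |]].
  apply Rle_trans with (eps / (K + 1) * K); [apply Rmult_le_compat_r; auto |].
  apply (Rmult_le_reg_r (K + 1)); [lra |]. field_simplify; nra.
Qed.

Lemma curve_tangent_deviation (T : R -> R) (Y : R -> nat -> R) t xs T' (W : nat -> R) m :
  T 0 = t -> (forall i, Y 0 i = xs i) ->
  derivable_pt_lim T 0 T' -> (forall i, (i <= m)%nat -> derivable_pt_lim (fun s => Y s i) 0 (W i)) ->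
  forall eps, 0 < eps -> exists del, 0 < del /\ forall s, Rabs s < del ->
    l1 m (T s - t - T' * s) (fun i => Y s i - xs i - W i * s) <= eps * Rabs s.
Proof.
  intros HT0 HY0 HT HY eps Heps. subst t.
  set (e' := eps / INR (S (S m))).
  assert (He' : 0 < e') by (apply Rdiv_lt_0_compat; [lra | apply lt_0_INR; lia]).
  destruct (derivable_first_order T T' HT e' He') as [dT [HdT HTb]].
  destruct (finite_delta (fun i d => forall s, Rabs s < d ->
      Rabs (Y s i - Y 0 i - W i * s) <= e' * Rabs s) m) as [dY [HdY HYb]].
  { intros j d d' Hd' Hp s Hs. apply Hp. lra. }
  { intros j Hj. apply (derivable_first_order (fun s => Y s j) (W j) (HY j Hj) e' He'). }
  exists (Rmin dT dY). split; [apply Rmin_pos; auto |]. intros s Hs.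
  replace (fun i => Y s i - xs i - W i * s) with (fun i => Y s i - Y 0 i - W i * s)
    by (apply functional_extensionality; intro i; rewrite HY0; reflexivity).
  assert (Hs1 : Rabs s < dT) by (eapply Rlt_le_trans; [exact Hs | apply Rmin_l]).
  assert (Hs2 : Rabs s < dY) by (eapply Rlt_le_trans; [exact Hs | apply Rmin_r]).
  unfold l1. eapply Rle_trans.
  - apply Rplus_le_compat; [apply HTb, Hs1 | apply (sum_Rle _ (fun _ => e' * Rabs s))].
    intros i Hi. apply HYb; auto.
  - rewrite sum_cte. unfold e'. rewrite (S_INR (S m)). assert (H0 := pos_INR (S m)).
    right. field. lra.
Qed.

Section CurveExpansion.

Variable U : R -> (nat -> R) -> Prop.
Hypothesis HU : open_sup U.

Lemma curve_first_order f m t xs (T : R -> R) (Y : R -> nat -> R) T' (W : nat -> R) et (e : nat -> R) :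
  smooth_cl U f -> jet_order m f -> U t xs -> T 0 = t -> (forall i, Y 0 i = xs i) ->
  derivable_pt_lim T 0 T' -> (forall i, (i <= m)%nat -> derivable_pt_lim (fun s => Y s i) 0 (W i)) ->
  forall eps, 0 < eps -> exists del, 0 < del /\ forall s r, Rabs s < del -> Rabs r < del ->
    Rabs (f (T s + r * et) (fun i => Y s i + r * e i) - f t xs
          - dlin f m t xs T' W * s - dlin f m t xs et e * r) <= eps * (Rabs s + Rabs r).
Proof.
  intros Hf Hm Hu HT0 HY0 HT HY eps Heps.
  set (C := 1 + l1 m T' W + l1 m et e).
  assert (HC : 1 <= C) by (unfold C; assert (H1 := l1_nonneg m T' W); assert (H2 := l1_nonneg m et e); lra).
  destruct (cl_first_order U HU f m t xs Hf Hm Hu (eps / (2 * C)) ltac:(apply Rdiv_lt_0_compat; lra))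
    as [dF [HdF HF]].
  destruct (small_factor (dnorm f m t xs) (eps / 2) (dnorm_nonneg f m t xs) ltac:(lra))
    as [e2 [He2 [He2a He2b]]].
  destruct (curve_tangent_deviation T Y t xs T' W m HT0 HY0 HT HY e2 He2) as [dD [HdD HDev]].
  exists (Rmin dD (dF / (2 * C))).
  assert (Hd1 := Rmin_l dD (dF / (2 * C))). assert (Hd2 := Rmin_r dD (dF / (2 * C))).
  split; [apply Rmin_pos; auto; apply Rdiv_lt_0_compat; lra |]. intros s r Hs Hr.
  (* the displacement from (t, xs) is (rt, rx) + s (T', W) + r (et, e) with (rt, rx) = o(s) *)
  set (rt := T s - t - T' * s). set (rx := fun i => Y s i - xs i - W i * s).
  assert (Hs0 : 0 <= Rabs s) by apply Rabs_pos. assert (Hr0 : 0 <= Rabs r) by apply Rabs_pos.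
  assert (Hdev : l1 m rt rx <= e2 * Rabs s) by (apply HDev; lra).
  assert (Edt : T s + r * et - t = rt + s * T' + r * et) by (unfold rt; ring).
  assert (Edx : (fun i => Y s i + r * e i - xs i) = (fun i => rx i + s * W i + r * e i))
    by (apply functional_extensionality; intro i; unfold rx; ring).
  assert (Hsize := l1_displacement m rt rx T' W et e s r ltac:(nra)). fold C in Hsize.
  assert (HsC : C * (Rabs s + Rabs r) < dF).
  { apply Rlt_le_trans with (C * (2 * (dF / (2 * C)))); [apply Rmult_lt_compat_l; lra |].
    right. field. lra. }
  clearbody rt rx C.
  destruct (l1_coord m (T s + r * et - t) (fun i => Y s i + r * e i - xs i)) as [Bt Bx].
  rewrite Edt, Edx in Bt, Bx.
  assert (Fr := HF (T s + r * et) (fun i => Y s i + r * e i) ltac:(rewrite Edt; lra)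
                   ltac:(intros i Hi; specialize (Bx i Hi); cbv beta in Bx |- *; lra)).
  rewrite Edt, Edx, dlin_affine in Fr.
  assert (Hlin := dlin_bound f m t xs rt rx).
  replace (f (T s + r * et) (fun i => Y s i + r * e i) - f t xs - dlin f m t xs T' W * s
           - dlin f m t xs et e * r)
    with ((f (T s + r * et) (fun i => Y s i + r * e i) - f t xs
           - (dlin f m t xs rt rx + s * dlin f m t xs T' W + r * dlin f m t xs et e))
          + dlin f m t xs rt rx) by ring.
  eapply Rle_trans; [apply Rabs_triang |].
  assert (Q1 : eps / (2 * C) * (C * (Rabs s + Rabs r)) = eps / 2 * (Rabs s + Rabs r)) by (field; lra).
  assert (Q2 : dnorm f m t xs * l1 m rt rx <= eps / 2 * Rabs s).
  { apply Rle_trans with (e2 * dnorm f m t xs * Rabs s); [| apply Rmult_le_compat_r; auto].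
    replace (e2 * dnorm f m t xs * Rabs s) with (dnorm f m t xs * (e2 * Rabs s)) by ring.
    apply Rmult_le_compat_l; auto. apply dnorm_nonneg. }
  assert (0 <= eps / (2 * C)) by (left; apply Rdiv_lt_0_compat; lra).
  assert (Q3 := Rmult_le_compat_l _ _ _ H Hsize).
  assert (0 <= eps * Rabs r) by (apply Rmult_le_pos; lra).
  lra.
Qed.

End CurveExpansion.

(** * A one-dimensional implicit function theorem *)

Definition first_order_at0 (g : R -> R -> R) (A B : R) : Prop :=
  forall eps, 0 < eps -> exists del, 0 < del /\ forall s r, Rabs s < del -> Rabs r < del ->
    Rabs (g s r - A * s - B * r) <= eps * (Rabs s + Rabs r).

Lemma root_in_interval (h : R -> R) rho : 0 < rho ->
  (forall a, -rho <= a <= rho -> continuity_pt h a) -> h (-rho) * h rho < 0 ->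
  exists r, Rabs r <= rho /\ h r = 0.
Proof.
  intros Hr Hc Hs.
  destruct (Rlt_dec (h (-rho)) 0) as [Hn|Hn].
  - assert (0 < h rho) by (destruct (Rlt_dec 0 (h rho)); [auto | nra]).
    destruct (IVT_interv h (-rho) rho Hc ltac:(lra) Hn ltac:(lra)) as [z [Hz E]].
    exists z. split; [apply Rabs_le; lra | exact E].
  - assert (h rho < 0) by (destruct (Rlt_dec (h rho) 0); [auto | nra]).
    destruct (IVT_interv (fun x => - h x) (-rho) rho) as [z [Hz E]];
      [intros a Ha; apply continuity_pt_opp; auto | lra | nra | lra |].
    exists z. split; [apply Rabs_le; lra | lra].
Qed.

Lemma linear_sign_change A B s rho gm gp : B <> 0 -> 0 < rho ->
  Rabs (gp - A * s - B * rho) <= Rabs B / 4 * (Rabs s + rho) ->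
  Rabs (gm - A * s - B * - rho) <= Rabs B / 4 * (Rabs s + rho) ->
  Rabs s * (2 * (Rabs A + Rabs B + 1)) <= rho * Rabs B -> gm * gp < 0.
Proof.
  intros HB Hrho Hp Hm Hs.
  apply Rabs_le_between in Hp. apply Rabs_le_between in Hm.
  assert (HAs : Rabs (A * s) <= Rabs A * Rabs s) by (rewrite Rabs_mult; lra).
  apply Rabs_le_between in HAs.
  assert (0 <= Rabs s) by apply Rabs_pos. assert (0 <= Rabs A * Rabs s) by (apply Rmult_le_pos; auto; apply Rabs_pos).
  destruct (Rlt_dec 0 B).
  - rewrite (Rabs_right B) in * by lra.
    assert (0 <= B * Rabs s) by (apply Rmult_le_pos; lra).
    assert (0 < B * rho) by (apply Rmult_lt_0_compat; lra).
    assert (0 < gp * (- gm)) by (apply Rmult_lt_0_compat; lra). lra.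
  - assert (B < 0) by (destruct (Req_dec B 0); [contradiction | lra]).
    rewrite (Rabs_left B) in * by lra.
    assert (0 <= - B * Rabs s) by (apply Rmult_le_pos; lra).
    assert (0 < - B * rho) by (apply Rmult_lt_0_compat; lra).
    assert (0 < (- gp) * gm) by (apply Rmult_lt_0_compat; lra). lra.
Qed.

Lemma linear_zero_bound A B s r :
  Rabs (0 - A * s - B * r) <= Rabs B / 4 * (Rabs s + Rabs r) ->
  Rabs r * (3 * Rabs B) <= (4 * Rabs A + Rabs B) * Rabs s.
Proof.
  intro Q. replace (0 - A * s - B * r) with (- (A * s + B * r)) in Q by ring. rewrite Rabs_Ropp in Q.
  assert (Rabs (B * r) <= Rabs (A * s + B * r) + Rabs (A * s))
    by (replace (B * r) with ((A * s + B * r) + - (A * s)) at 1 by ring;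
        eapply Rle_trans; [apply Rabs_triang | rewrite Rabs_Ropp; lra]).
  rewrite !Rabs_mult in *. lra.
Qed.

Section ImplicitFunction.

Variables (g : R -> R -> R) (A B : R).
Hypothesis HB : B <> 0.
Hypothesis Hg : first_order_at0 g A B.

(* For small s, g s . changes sign on a small interval, hence has a zero there. *)
Lemma implicit_zero_exists : (exists d0, 0 < d0 /\ forall s, Rabs s < d0 -> forall r, Rabs r < d0 ->
    continuity_pt (g s) r) ->
  exists d1, 0 < d1 /\ forall s, Rabs s < d1 -> exists r, g s r = 0
    /\ Rabs r * (3 * Rabs B) <= (4 * Rabs A + Rabs B) * Rabs s.
Proof.
  intros [d0 [Hd0 Hcont]].
  assert (HaB : 0 < Rabs B) by (apply Rabs_pos_lt; auto).
  assert (HA : 0 <= Rabs A) by apply Rabs_pos.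
  destruct (Hg (Rabs B / 4) ltac:(lra)) as [dl [Hdl H0]].
  set (rho := Rmin dl d0 / 2).
  assert (Hm := Rmin_l dl d0). assert (Hm' := Rmin_r dl d0).
  assert (Hrho : 0 < rho) by (unfold rho; assert (0 < Rmin dl d0) by (apply Rmin_pos; auto); lra).
  assert (Hrho1 : rho < dl) by (unfold rho; lra). assert (Hrho2 : rho < d0) by (unfold rho; lra).
  set (d1 := Rmin rho (rho * Rabs B / (2 * (Rabs A + Rabs B + 1)))).
  assert (Hd1a : d1 <= rho) by apply Rmin_l.
  assert (Hd1b : d1 * (2 * (Rabs A + Rabs B + 1)) <= rho * Rabs B).
  { apply Rle_trans with (rho * Rabs B / (2 * (Rabs A + Rabs B + 1)) * (2 * (Rabs A + Rabs B + 1))).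
    - apply Rmult_le_compat_r; [lra | apply Rmin_r].
    - right. field. lra. }
  exists d1. split; [apply Rmin_pos; [lra | apply Rdiv_lt_0_compat; nra] |].
  intros s Hs. assert (Hs0 : 0 <= Rabs s) by apply Rabs_pos.
  destruct (root_in_interval (g s) rho Hrho) as [r [Hr E]].
  - intros a Ha. apply Hcont; [lra | apply Rle_lt_trans with rho; [apply Rabs_le; lra | lra]].
  - apply (linear_sign_change A B s rho); auto; [| | nra].
    + assert (H := H0 s rho ltac:(lra) ltac:(rewrite Rabs_right; lra)).
      rewrite (Rabs_right rho) in H by lra. exact H.
    + assert (H := H0 s (-rho) ltac:(lra) ltac:(rewrite Rabs_left; lra)).
      rewrite Rabs_Ropp, (Rabs_right rho) in H by lra. exact H.
  - exists r. split; [exact E |]. apply linear_zero_bound.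
    rewrite <- E. apply H0; lra.
Qed.

Lemma implicit_derivative (rr : R -> R) d1 C : 0 < d1 -> 0 <= C ->
  (forall s, Rabs s < d1 -> g s (rr s) = 0 /\ Rabs (rr s) <= C * Rabs s) ->
  rr 0 = 0 /\ derivable_pt_lim rr 0 (- A / B).
Proof.
  intros Hd1 HC Hrr.
  assert (HaB : 0 < Rabs B) by (apply Rabs_pos_lt; auto).
  assert (R0 : rr 0 = 0).
  { destruct (Hrr 0 ltac:(rewrite Rabs_R0; auto)) as [_ Hb].
    rewrite Rabs_R0, Rmult_0_r in Hb. apply Rabs_eq_0. apply Rle_antisym; [exact Hb | apply Rabs_pos]. }
  split; [exact R0 |]. intros eps Heps.
  destruct (Hg (eps * Rabs B / (2 * (1 + C))) ltac:(apply Rdiv_lt_0_compat; nra)) as [dl [Hdl H3]].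
  set (dd := Rmin d1 (dl / (C + 1))).
  assert (Hdd : 0 < dd) by (apply Rmin_pos; auto; apply Rdiv_lt_0_compat; lra).
  exists (mkposreal dd Hdd). intros h Hh0 Hh. simpl in Hh.
  assert (Hh1 : Rabs h < d1) by (eapply Rlt_le_trans; [exact Hh | apply Rmin_l]).
  assert (Hh2 : Rabs h * (C + 1) < dl).
  { assert (Rabs h < dl / (C + 1)) by (eapply Rlt_le_trans; [exact Hh | apply Rmin_r]).
    apply (Rmult_lt_reg_r (/ (C + 1))); [apply Rinv_0_lt_compat; lra |].
    rewrite Rmult_assoc, Rinv_r by lra. lra. }
  rewrite Rplus_0_l, R0. destruct (Hrr h Hh1) as [Hz Hb].
  assert (HhP : 0 < Rabs h) by (apply Rabs_pos_lt; auto).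
  assert (Q := H3 h (rr h) ltac:(nra) ltac:(nra)). rewrite Hz in Q.
  replace ((rr h - 0) / h - - A / B) with (- (0 - A * h - B * rr h) / (B * h)) by (field; auto).
  unfold Rdiv. rewrite Rabs_mult, Rabs_Ropp, Rabs_inv, Rabs_mult.
  apply (Rmult_lt_reg_r (Rabs B * Rabs h)); [nra |].
  rewrite Rmult_assoc, Rinv_l, Rmult_1_r by nra.
  apply Rle_lt_trans with (eps * Rabs B / (2 * (1 + C)) * ((1 + C) * Rabs h)).
  - eapply Rle_trans; [exact Q |]. apply Rmult_le_compat_l; [| lra].
    left; apply Rdiv_lt_0_compat; nra.
  - replace (eps * Rabs B / (2 * (1 + C)) * ((1 + C) * Rabs h)) with (eps * (Rabs B * Rabs h) / 2)
      by (field; lra).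
    assert (0 < eps * (Rabs B * Rabs h)) by (apply Rmult_lt_0_compat; nra). lra.
Qed.

Theorem implicit_function :
  (exists d0, 0 < d0 /\ forall s, Rabs s < d0 -> forall r, Rabs r < d0 -> continuity_pt (g s) r) ->
  exists (rr : R -> R) d1, 0 < d1 /\ (forall s, Rabs s < d1 -> g s (rr s) = 0) /\ rr 0 = 0 /\
    derivable_pt_lim rr 0 (- A / B).
Proof.
  intro Hc. assert (HaB : 0 < Rabs B) by (apply Rabs_pos_lt; auto).
  destruct (implicit_zero_exists Hc) as [d1 [Hd1 Hex]].
  set (C := (4 * Rabs A + Rabs B) / (3 * Rabs B)).
  assert (HC : 0 <= C)
    by (unfold C; apply Rle_mult_inv_pos; [assert (0 <= Rabs A) by apply Rabs_pos; lra | lra]).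
  set (P := fun s r => g s r = 0 /\ Rabs r <= C * Rabs s).
  set (rr := fun s => epsilon (inhabits 0) (P s)).
  assert (Hrr : forall s, Rabs s < d1 -> P s (rr s)).
  { intros s Hs. apply epsilon_spec. destruct (Hex s Hs) as [r [E Hb]].
    exists r. split; [exact E |]. unfold C.
    apply (Rmult_le_reg_r (3 * Rabs B)); [lra |].
    replace ((4 * Rabs A + Rabs B) / (3 * Rabs B) * Rabs s * (3 * Rabs B))
      with ((4 * Rabs A + Rabs B) * Rabs s) by (field; lra). exact Hb. }
  destruct (implicit_derivative rr d1 C Hd1 HC Hrr) as [R0 Hd].
  exists rr, d1. repeat split; auto. intros s Hs. apply Hrr, Hs.
Qed.

End ImplicitFunction.

Definition curve_cont (T : R -> R) (Y : R -> nat -> R) t xs : Prop :=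
  forall eps, 0 < eps -> exists del, 0 < del /\ forall s, Rabs s < del ->
    Rabs (T s - t) < eps /\ forall i, Rabs (Y s i - xs i) < eps.

Lemma perturbed_close T Y t xs et (e : nat -> R) M : curve_cont T Y t xs ->
  (forall i, Rabs (e i) <= M) -> forall eps, 0 < eps -> exists del, 0 < del /\
    forall s r, Rabs s < del -> Rabs r < del ->
      Rabs (T s + r * et - t) < eps /\ forall i, Rabs (Y s i + r * e i - xs i) < eps.
Proof.
  intros Hc HM eps Heps.
  assert (HM0 : 0 <= M) by (specialize (HM 0%nat); assert (0 <= Rabs (e 0%nat)) by apply Rabs_pos; lra).
  assert (Het : 0 <= Rabs et) by apply Rabs_pos.
  set (Me := Rabs et + M + 1).
  assert (HMe : 0 < Me) by (unfold Me; lra).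
  destruct (Hc (eps / 2) ltac:(lra)) as [dc [Hdc H]].
  exists (Rmin dc (eps / (2 * Me))).
  assert (Hm1 := Rmin_l dc (eps / (2 * Me))). assert (Hm2 := Rmin_r dc (eps / (2 * Me))).
  split; [apply Rmin_pos; auto; apply Rdiv_lt_0_compat; lra |]. intros s r Hs Hr.
  destruct (H s ltac:(lra)) as [Ht Hy].
  assert (Hr0 : 0 <= Rabs r) by apply Rabs_pos.
  assert (Hr' : Rabs r * Me < eps / 2).
  { apply Rlt_le_trans with (eps / (2 * Me) * Me); [apply Rmult_lt_compat_r; lra |].
    right. field. lra. }
  assert (Bound : forall c, Rabs c <= Me -> Rabs (r * c) < eps / 2).
  { intros c Hc'. rewrite Rabs_mult.
    apply Rle_lt_trans with (Rabs r * Me); [apply Rmult_le_compat_l |]; lra. }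
  split.
  - replace (T s + r * et - t) with ((T s - t) + r * et) by ring.
    eapply Rle_lt_trans; [apply Rabs_triang |]. assert (Rabs (r * et) < eps / 2) by (apply Bound; unfold Me; lra).
    lra.
  - intro i. replace (Y s i + r * e i - xs i) with ((Y s i - xs i) + r * e i) by ring.
    eapply Rle_lt_trans; [apply Rabs_triang |].
    assert (Rabs (r * e i) < eps / 2) by (apply Bound; specialize (HM i); unfold Me; lra).
    specialize (Hy i). lra.
Qed.

Lemma cont_at_line f a (ys : nat -> R) et (e : nat -> R) M r0 : (forall i, Rabs (e i) <= M) ->
  cont_at f (a + r0 * et) (fun i => ys i + r0 * e i) ->
  continuity_pt (fun r => f (a + r * et) (fun i => ys i + r * e i)) r0.
Proof.
  intros HM Hc eps Heps.
  assert (HM0 : 0 <= M) by (specialize (HM 0%nat); assert (0 <= Rabs (e 0%nat)) by apply Rabs_pos; lra).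
  assert (Het : 0 <= Rabs et) by apply Rabs_pos.
  set (Me := Rabs et + M + 1).
  assert (HMe : 0 < Me) by (unfold Me; lra).
  destruct (Hc eps Heps) as [d [Hd H]].
  exists (d / Me). split; [apply Rdiv_lt_0_compat; lra |].
  intros r [_ Hr]. simpl in *. unfold R_dist in *.
  assert (Hrr : Rabs (r - r0) * Me < d).
  { apply Rlt_le_trans with (d / Me * Me); [apply Rmult_lt_compat_r; lra | right; field; lra]. }
  assert (Bound : forall c, Rabs c <= Me -> Rabs ((r - r0) * c) < d).
  { intros c Hc'. rewrite Rabs_mult. assert (0 <= Rabs (r - r0)) by apply Rabs_pos.
    apply Rle_lt_trans with (Rabs (r - r0) * Me); [apply Rmult_le_compat_l |]; lra. }
  apply H.
  - replace (a + r * et - (a + r0 * et)) with ((r - r0) * et) by ring. apply Bound. unfold Me. lra.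
  - intro i. replace (ys i + r * e i - (ys i + r0 * e i)) with ((r - r0) * e i) by ring.
    apply Bound. specialize (HM i). unfold Me. lra.
Qed.

Lemma curve_cont_perturb T Y t xs (rr : R -> R) et (e : nat -> R) M l :
  curve_cont T Y t xs -> rr 0 = 0 -> derivable_pt_lim rr 0 l -> (forall i, Rabs (e i) <= M) ->
  curve_cont (fun s => T s + rr s * et) (fun s i => Y s i + rr s * e i) t xs.
Proof.
  intros Hc H0 Hd HM eps Heps.
  destruct (perturbed_close T Y t xs et e M Hc HM eps Heps) as [d1 [Hd1 H1]].
  assert (Hcr : continuity_pt rr 0) by (apply derivable_continuous_pt; exists l; exact Hd).
  destruct (Hcr d1 Hd1) as [d2 [Hd2 H2]].
  exists (Rmin d1 d2). split; [apply Rmin_pos; auto |]. intros s Hs.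
  assert (Hs1 : Rabs s < d1) by (eapply Rlt_le_trans; [exact Hs | apply Rmin_l]).
  assert (Hs2 : Rabs s < d2) by (eapply Rlt_le_trans; [exact Hs | apply Rmin_r]).
  assert (Hr : Rabs (rr s) < d1).
  { destruct (Req_dec s 0) as [->|Hs0]; [rewrite H0, Rabs_R0; exact Hd1 |].
    assert (Q : dist R_met (rr s) (rr 0) < d1).
    { apply H2. split; [split; [exact I | auto] |]. simpl. unfold R_dist. rewrite Rminus_0_r. exact Hs2. }
    simpl in Q. unfold R_dist in Q. rewrite H0, Rminus_0_r in Q. exact Q. }
  exact (H1 s (rr s) Hs1 Hr).
Qed.

Section CurveCorrection.

Variable U : R -> (nat -> R) -> Prop.
Hypothesis HU : open_sup U.

Lemma correct_curve f m t xs (T : R -> R) (Y : R -> nat -> R) T' (W : nat -> R) et (e : nat -> R) M :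
  smooth_cl U f -> jet_order m f -> U t xs -> T 0 = t -> (forall i, Y 0 i = xs i) ->
  derivable_pt_lim T 0 T' -> (forall i, (i <= m)%nat -> derivable_pt_lim (fun s => Y s i) 0 (W i)) ->
  curve_cont T Y t xs -> (forall i, Rabs (e i) <= M) -> dlin f m t xs et e <> 0 ->
  exists rr : R -> R, exists d1, 0 < d1 /\
    (forall s, Rabs s < d1 -> f (T s + rr s * et) (fun i => Y s i + rr s * e i) = f t xs) /\
    rr 0 = 0 /\ derivable_pt_lim rr 0 (- dlin f m t xs T' W / dlin f m t xs et e) /\
    curve_cont (fun s => T s + rr s * et) (fun s i => Y s i + rr s * e i) t xs.
Proof.
  intros Hf Hm Hu HT0 HY0 HT HY Hcc HM HB.
  set (g := fun s r => f (T s + r * et) (fun i => Y s i + r * e i) - f t xs).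
  assert (Hfo : first_order_at0 g (dlin f m t xs T' W) (dlin f m t xs et e)).
  { intros eps Heps.
    destruct (curve_first_order U HU f m t xs T Y T' W et e Hf Hm Hu HT0 HY0 HT HY eps Heps)
      as [del [Hdel Hc]].
    exists del. split; auto. }
  assert (Hcont : exists d0, 0 < d0 /\ forall s, Rabs s < d0 -> forall r, Rabs r < d0 ->
                    continuity_pt (g s) r).
  { destruct (HU t xs Hu) as [dU [HdU HU0]].
    destruct (perturbed_close T Y t xs et e M Hcc HM dU HdU) as [d0 [Hd0 Hclose]].
    exists d0. split; auto. intros s Hs r Hr. destruct (Hclose s r Hs Hr) as [C1 C2].
    apply continuity_pt_minus; [| apply continuity_pt_const; intros ? ?; reflexivity].
    apply (cont_at_line f (T s) (Y s) et e M r HM), (cl_cont U HU); auto. }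
  destruct (implicit_function g _ _ HB Hfo Hcont) as [rr [d1 [Hd1 [Hz [H0 Hd]]]]].
  exists rr, d1. split; [exact Hd1 | split; [| split; [exact H0 | split; [exact Hd |]]]].
  - intros s Hs. specialize (Hz s Hs). unfold g in Hz. lra.
  - exact (curve_cont_perturb T Y t xs rr et e M _ Hcc H0 Hd HM).
Qed.

End CurveCorrection.

(** * Curves along which z, zeta_0, ..., zeta_{k-1} are constant *)

Definition tangent_curve (k : nat) (vt : R) (vx : nat -> R) t0 xs0 (T : R -> R) (Y : R -> nat -> R)
  : Prop :=
  T 0 = t0 /\ (forall i, Y 0 i = xs0 i) /\ derivable_pt_lim T 0 vt /\
  (forall i, (i <= k)%nat -> derivable_pt_lim (fun s => Y s i) 0 (vx i)) /\
  (forall i, (k < i)%nat -> forall s, Y s i = xs0 i) /\ curve_cont T Y t0 xs0.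

Definition invariant_curve (K : nat) (z zeta : Jet) (k : nat) (vt : R) (vx : nat -> R) t0 xs0 : Prop :=
  exists T Y, tangent_curve k vt vx t0 xs0 T Y /\ exists del, 0 < del /\ forall s, Rabs s < del ->
    z (T s) (Y s) = z t0 xs0 /\
    forall j, (j < k)%nat -> zeta_seq K z zeta j (T s) (Y s) = zeta_seq K z zeta j t0 xs0.

Lemma curve_cont_const t xs : curve_cont (fun _ => t) (fun _ => xs) t xs.
Proof.
  intros eps Heps. exists 1. split; [lra |]. intros s _.
  rewrite Rminus_diag, Rabs_R0. split; auto. intro i. rewrite Rminus_diag, Rabs_R0. auto.
Qed.

Lemma lam_prol_dlin K rho phi0 lam k f t xs :
  lam_prol K rho phi0 lam k f t xs = dlin f k t xs (rho t xs) (fun i => phi_lam K rho phi0 lam i t xs).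
Proof.
  unfold lam_prol, dlin. rewrite (Rmult_comm (rho t xs)). f_equal. apply sum_eq; intros; ring.
Qed.

Definition unit_vec (j : nat) : nat -> R := fun i => if Nat.eqb i j then 1 else 0.
Definition truncate (k : nat) (vx : nat -> R) : nat -> R := fun i => if Nat.leb i k then vx i else 0.

Lemma dlin_unit f m t xs j : (j <= m)%nat -> dlin f m t xs 0 (unit_vec j) = px j f t xs.
Proof.
  intro Hj. unfold dlin, unit_vec.
  rewrite (sum_eq _ (fun i => px i f t xs * (if Nat.eqb j i then 1 else 0))), sum_delta.
  - rewrite (proj2 (Nat.leb_le j m)) by lia. ring.
  - intros i _. destruct (Nat.eqb_spec i j), (Nat.eqb_spec j i); try lia; reflexivity.
Qed.

Lemma dlin_truncate f k t xs vt vx :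
  dlin f (S k) t xs vt (truncate k vx) = dlin f (S k) t xs vt vx - px (S k) f t xs * vx (S k).
Proof.
  unfold dlin, truncate. rewrite !tech5, (proj2 (Nat.leb_nle (S k) k)) by lia.
  rewrite (sum_eq (fun i => px i f t xs * (if Nat.leb i k then vx i else 0)) (fun i => px i f t xs * vx i))
    by (intros i Hi; rewrite (proj2 (Nat.leb_le i k)) by lia; reflexivity).
  ring.
Qed.

Lemma truncate_unit k vx i : (i <= S k)%nat -> vx i = truncate k vx i + vx (S k) * unit_vec (S k) i.
Proof.
  intro Hi. unfold truncate, unit_vec.
  destruct (Nat.leb_spec i k), (Nat.eqb_spec i (S k)); try lia; subst; ring.
Qed.

Section InvariantCurves.

Variable U : R -> (nat -> R) -> Prop.
Hypothesis HU : open_sup U.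
Variable K : nat.
Variables z zeta : Jet.
Hypotheses (Hz : smooth_cl U z) (Hze : smooth_cl U zeta) (Hoz : jet_order 0 z) (Hoze : jet_order 1 zeta).
Hypothesis Hzeta1 : forall t xs, U t xs -> px 1 zeta t xs <> 0.
Hypothesis HDz : forall t xs, U t xs -> Dt K z t xs <> 0.
Variables (t0 : R) (xs0 : nat -> R).
Hypothesis Hu0 : U t0 xs0.
Variables (vt : R) (vx : nat -> R).

Local Notation Z := (zeta_seq K z zeta).

(* Start: the line in direction (vt, vx_0), corrected along the gradient of z,
   keeps z constant; the correction is of second order when dz(vt, vx_0) = 0. *)
Lemma invariant_curve_start : dlin z 0 t0 xs0 vt vx = 0 -> invariant_curve K z zeta 0 vt vx t0 xs0.
Proof.
  intro Hv.
  set (zt := pt z t0 xs0). set (zx := px 0 z t0 xs0).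
  set (e := fun i : nat => if Nat.eqb i 0 then zx else 0).
  set (line := fun i : nat => if Nat.eqb i 0 then vx 0%nat else 0).
  assert (HM : forall i, Rabs (e i) <= Rabs zx)
    by (intro i; unfold e; destruct (Nat.eqb i 0); [lra | rewrite Rabs_R0; apply Rabs_pos]).
  assert (HL : forall i, Rabs (line i) <= Rabs (vx 0%nat))
    by (intro i; unfold line; destruct (Nat.eqb i 0); [lra | rewrite Rabs_R0; apply Rabs_pos]).
  assert (Hlc := curve_cont_perturb _ _ t0 xs0 (fun s => s) vt line _ 1
                   (curve_cont_const t0 xs0) eq_refl (derivable_id 0) HL).
  cbv beta in Hlc.
  assert (HB : dlin z 0 t0 xs0 zt e <> 0).
  { unfold dlin, e. simpl. fold zt zx. intro E.
    assert (zt = 0) by nra. assert (zx = 0) by nra.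
    apply (HDz t0 xs0 Hu0). rewrite Dt_order0 by auto. fold zt zx. rewrite H, H0. ring. }
  assert (HW : forall i, (i <= 0)%nat -> derivable_pt_lim (fun s => xs0 i + s * line i) 0 (vx i)).
  { intros i Hi. replace i with 0%nat by lia. apply derivable_affine. }
  destruct (correct_curve U HU z 0 t0 xs0 (fun s => t0 + s * vt) (fun s i => xs0 i + s * line i)
              vt vx zt e _ Hz Hoz Hu0 ltac:(cbv beta; ring) ltac:(intro; cbv beta; ring)
              (derivable_affine _ _ _) HW Hlc HM HB)
    as [rr [d1 [Hd1 [Hinv [H0 [Hd Hcc]]]]]].
  replace (- dlin z 0 t0 xs0 vt vx / dlin z 0 t0 xs0 zt e) with 0 in Hd
    by (rewrite Hv; unfold Rdiv; ring).
  exists (fun s => t0 + s * vt + rr s * zt), (fun s i => xs0 i + s * line i + rr s * e i).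
  split; [repeat split |].
  - rewrite H0. ring.
  - intro i. rewrite H0. ring.
  - apply (derivable_add_scal _ _ 0 vt 0); [apply derivable_affine | exact Hd | ring].
  - intros i Hi. replace i with 0%nat by lia.
    apply (derivable_add_scal _ _ 0 (vx 0%nat) 0); [apply derivable_affine | exact Hd | ring].
  - intros i Hi s. unfold line, e. destruct (Nat.eqb_spec i 0); [lia | ring].
  - exact Hcc.
  - exists d1. split; auto. intros s Hs. split; [apply Hinv; auto | intros j Hj; lia].
Qed.

(* Step: correcting x_{k+1} keeps zeta_k constant, using d zeta_k / d x_{k+1} <> 0;
   the velocity of x_{k+1} becomes vx_{k+1} when d zeta_k(vt, vx) = 0. *)
Lemma invariant_curve_step k : (k < K)%nat -> dlin (Z k) (S k) t0 xs0 vt vx = 0 ->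
  invariant_curve K z zeta k vt vx t0 xs0 -> invariant_curve K z zeta (S k) vt vx t0 xs0.
Proof.
  intros Hk Hv [T [Y [[HT0 [HY0 [HT [HY [Hfar Hcc]]]]] [del [Hdel Hinv]]]]].
  assert (CZ : smooth_cl U (Z k)) by (apply cl_zeta_seq; auto).
  assert (HoZ : jet_order (S k) (Z k)) by (apply zeta_seq_order; auto).
  set (e := unit_vec (S k)).
  assert (HM : forall i, Rabs (e i) <= 1)
    by (intro i; unfold e, unit_vec; destruct (Nat.eqb i (S k)); rewrite ?Rabs_R1, ?Rabs_R0; lra).
  (* the curve does not move x_{k+1}: its velocity there is 0 *)
  assert (HWd : forall i, (i <= S k)%nat -> derivable_pt_lim (fun s => Y s i) 0 (truncate k vx i)).
  { intros i Hi. unfold truncate. destruct (Nat.leb_spec i k); [apply HY; auto |].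
    eapply derivable_ext; [apply (derivable_const (xs0 i)) |]. intro s. rewrite Hfar; auto. }
  assert (Hpx := px_zeta_nonzero U HU K z zeta Hz Hze Hoz Hoze HDz k t0 xs0 Hk Hzeta1 Hu0).
  assert (HB : dlin (Z k) (S k) t0 xs0 0 e <> 0) by (unfold e; rewrite dlin_unit; auto).
  destruct (correct_curve U HU (Z k) (S k) t0 xs0 T Y vt _ 0 e 1 CZ HoZ Hu0 HT0 HY0 HT HWd Hcc HM HB)
    as [rr [d1 [Hd1 [H1 [H0 [Hd Hcc']]]]]].
  replace (- dlin (Z k) (S k) t0 xs0 vt (truncate k vx) / dlin (Z k) (S k) t0 xs0 0 e) with (vx (S k)) in Hd
    by (unfold e; rewrite dlin_unit, dlin_truncate, Hv by auto; field; auto).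
  exists (fun s => T s + rr s * 0), (fun s i => Y s i + rr s * e i). split; [repeat split |].
  - rewrite H0. lra.
  - intro i. rewrite H0, HY0. ring.
  - apply (derivable_add_scal _ _ 0 vt (vx (S k))); auto. ring.
  - intros i Hi. apply (derivable_add_scal _ _ 0 (truncate k vx i) (vx (S k))); auto.
    unfold e. apply truncate_unit, Hi.
  - intros i Hi s. unfold e, unit_vec. destruct (Nat.eqb_spec i (S k)); [lia |]. rewrite Hfar by lia. ring.
  - exact Hcc'.
  - exists (Rmin del d1). split; [apply Rmin_pos; auto |]. intros s Hs.
    assert (Hs1 : Rabs s < del) by (eapply Rlt_le_trans; [exact Hs | apply Rmin_l]).
    assert (Hs2 : Rabs s < d1) by (eapply Rlt_le_trans; [exact Hs | apply Rmin_r]).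
    destruct (Hinv s Hs1) as [Iz Ij].
    (* the correction only moves x_{k+1}, on which z and zeta_j, j < k, do not depend *)
    assert (Same : forall g m, jet_order m g -> (m <= k)%nat ->
              g (T s + rr s * 0) (fun i => Y s i + rr s * e i) = g (T s) (Y s)).
    { intros g m Hg Hm. rewrite Rmult_0_r, Rplus_0_r. apply Hg. intros i Hi.
      unfold e, unit_vec. destruct (Nat.eqb_spec i (S k)); [lia | ring]. }
    split; [rewrite (Same z 0%nat); auto; lia |].
    intros j Hj. destruct (Nat.eq_dec j k) as [->|Hne]; [apply H1; auto |].
    rewrite (Same _ (S j)); [apply Ij; lia | apply zeta_seq_order; auto | lia].
Qed.

End InvariantCurves.

Lemma small_zero a : (forall eps, 0 < eps -> Rabs a <= eps) -> a = 0.
Proof.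
  intro H. destruct (Req_dec a 0) as [|Ha]; auto. exfalso.
  assert (0 < Rabs a) by (apply Rabs_pos_lt; auto). specialize (H (Rabs a / 2)). lra.
Qed.

Section Tangency.

Variable U : R -> (nat -> R) -> Prop.
Hypothesis HU : open_sup U.

Lemma vanishing_along_curve h m t0 xs0 vt vx T Y : smooth_cl U h -> jet_order m h -> U t0 xs0 ->
  tangent_curve m vt vx t0 xs0 T Y -> h t0 xs0 = 0 ->
  (exists del, 0 < del /\ forall s, Rabs s < del -> h (T s) (Y s) = 0) ->
  dlin h m t0 xs0 vt vx = 0.
Proof.
  intros Hh Hm Hu [HT0 [HY0 [HT [HY _]]]] Hp [del [Hdel Hzero]].
  apply small_zero. intros eps Heps.
  destruct (curve_first_order U HU h m t0 xs0 T Y vt vx 0 (fun _ => 0) Hh Hm Hu HT0 HY0 HT HY eps Heps)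
    as [d [Hd Hc]].
  set (s := Rmin del d / 2).
  assert (Hm1 := Rmin_l del d). assert (Hm2 := Rmin_r del d).
  assert (Hs : 0 < s) by (unfold s; assert (0 < Rmin del d) by (apply Rmin_pos; auto); lra).
  assert (Has : Rabs s = s) by (apply Rabs_right; lra).
  specialize (Hc s 0 ltac:(unfold s in *; lra) ltac:(rewrite Rabs_R0; auto)).
  replace (T s + 0 * 0) with (T s) in Hc by ring.
  replace (fun i => Y s i + 0 * 0) with (Y s) in Hc
    by (apply functional_extensionality; intro i; ring).
  rewrite Hzero, Hp, Rabs_R0, Rplus_0_r, Has in Hc by (unfold s in *; lra).
  replace (0 - 0 - dlin h m t0 xs0 vt vx * s - dlin h m t0 xs0 0 (fun _ => 0) * 0)
    with (- (dlin h m t0 xs0 vt vx * s)) in Hc by ring.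
  rewrite Rabs_Ropp, Rabs_mult, Has in Hc. apply (Rmult_le_reg_r s); auto.
Qed.

End Tangency.

Section InvariantCurveConstruction.

Variable U : R -> (nat -> R) -> Prop.
Hypothesis HU : open_sup U.
Variable K : nat.
Variables z zeta : Jet.
Hypotheses (Hz : smooth_cl U z) (Hze : smooth_cl U zeta) (Hoz : jet_order 0 z) (Hoze : jet_order 1 zeta).
Hypothesis Hzeta1 : forall t xs, U t xs -> px 1 zeta t xs <> 0.
Hypothesis HDz : forall t xs, U t xs -> Dt K z t xs <> 0.

Lemma invariant_curve_exists t0 xs0 vt vx : U t0 xs0 ->
  dlin z 0 t0 xs0 vt vx = 0 ->
  (forall k, (k < K)%nat -> dlin (zeta_seq K z zeta k) (S k) t0 xs0 vt vx = 0) ->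
  invariant_curve K z zeta K vt vx t0 xs0.
Proof.
  intros Hu Hv0 Hv. enough (forall k, (k <= K)%nat -> invariant_curve K z zeta k vt vx t0 xs0) by auto.
  induction k as [|k IHk]; intro Hk.
  - apply (invariant_curve_start U HU K z zeta Hz Hoz HDz); auto.
  - apply (invariant_curve_step U HU K z zeta Hz Hze Hoz Hoze Hzeta1 HDz); auto; try lia.
    apply IHk; lia.
Qed.

End InvariantCurveConstruction.

Lemma curve_in U T Y t xs : open_sup U -> U t xs -> curve_cont T Y t xs ->
  exists d, 0 < d /\ forall s, Rabs s < d -> U (T s) (Y s).
Proof.
  intros HU Hu Hc. destruct (HU t xs Hu) as [dU [HdU HU0]].
  destruct (Hc dU HdU) as [d [Hd H]]. exists d. split; auto.
  intros s Hs. destruct (H s Hs). auto.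
Qed.

Lemma solutions_persist n U F z zeta Delta T Y t0 xs0 del :
  (1 <= n)%nat -> open_sup U -> jet_order (n - 1) Delta -> U t0 xs0 -> curve_cont T Y t0 xs0 ->
  (forall t xs, U t xs ->
     (xs n = F t xs <-> Delta (z t xs) (fun i => zeta_seq n z zeta i t xs) = 0)) ->
  xs0 n = F t0 xs0 -> 0 < del ->
  (forall s, Rabs s < del -> z (T s) (Y s) = z t0 xs0 /\
     forall j, (j < n)%nat -> zeta_seq n z zeta j (T s) (Y s) = zeta_seq n z zeta j t0 xs0) ->
  exists d, 0 < d /\ forall s, Rabs s < d -> Y s n - F (T s) (Y s) = 0.
Proof.
  intros Hn HU HDo Hu Hc Hcoinc Heq Hdel Hinv.
  destruct (curve_in U T Y t0 xs0 HU Hu Hc) as [dc [Hdc Hin]].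
  exists (Rmin del dc). split; [apply Rmin_pos; auto |]. intros s Hs.
  assert (Hs1 : Rabs s < del) by (eapply Rlt_le_trans; [exact Hs | apply Rmin_l]).
  assert (Hs2 : Rabs s < dc) by (eapply Rlt_le_trans; [exact Hs | apply Rmin_r]).
  destruct (Hinv s Hs1) as [Iz Ij].
  assert (D : Delta (z (T s) (Y s)) (fun i => zeta_seq n z zeta i (T s) (Y s)) = 0).
  { rewrite Iz, <- (proj1 (Hcoinc t0 xs0 Hu) Heq). apply HDo. intros i Hi. apply Ij. lia. }
  apply (Hcoinc _ _ (Hin s Hs2)) in D. lra.
Qed.

Lemma tangent_to_reduced_equation n U F z zeta Delta rho phi0 lam :
  (1 <= n)%nat -> open_sup U -> jet_order (n - 1) F -> smooth_on U F ->
  smooth_cl U z -> smooth_cl U zeta -> jet_order 0 z -> jet_order 1 zeta ->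
  jet_order (n - 1) Delta ->
  (forall t xs, U t xs -> px 1 zeta t xs <> 0) -> (forall t xs, U t xs -> Dt n z t xs <> 0) ->
  (forall t xs, U t xs ->
     (xs n = F t xs <-> Delta (z t xs) (fun i => zeta_seq n z zeta i t xs) = 0)) ->
  smooth_cl U rho -> smooth_cl U phi0 -> smooth_cl U lam ->
  (forall t xs, U t xs -> lam_prol n rho phi0 lam n z t xs = 0) ->
  (forall t xs, U t xs -> lam_prol n rho phi0 lam n zeta t xs = 0) ->
  forall t0 xs0, U t0 xs0 -> xs0 n = F t0 xs0 ->
    lam_prol n rho phi0 lam n (fun t' ys => ys n - F t' ys) t0 xs0 = 0.
Proof.
  intros Hn HU HFo HFs Cz Cze Hzo Hzeo HDo Hzeta1 HDtz Hcoinc Crho Cphi0 Clam Kz Kze t0 xs0 Hu Heq.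
  set (vx := fun i => phi_lam n rho phi0 lam i t0 xs0).
  (* V(p) is tangent to the level sets of z and of the zeta_k, k < n ... *)
  assert (Vz : dlin z 0 t0 xs0 (rho t0 xs0) vx = 0).
  { unfold vx. rewrite <- lam_prol_dlin, (lam_prol_order n rho phi0 lam 0 n z 0), Nat.add_0_l by auto.
    apply Kz, Hu. }
  assert (Vzk : forall k, (k < n)%nat -> dlin (zeta_seq n z zeta k) (S k) t0 xs0 (rho t0 xs0) vx = 0).
  { intros k Hk. unfold vx. rewrite <- lam_prol_dlin.
    rewrite (lam_prol_order n rho phi0 lam (S k) (n - S k) _ (S k)) by (auto using zeta_seq_order).
    replace (S k + (n - S k))%nat with n by lia.
    apply (zeta_seq_invariant U HU n z zeta); auto. }
  (* ... so some curve with velocity V(p) keeps them all constant *)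
  destruct (invariant_curve_exists U HU n z zeta Cz Cze Hzo Hzeo Hzeta1 HDtz t0 xs0 _ _ Hu Vz Vzk)
    as [T [Y [Htc [del [Hdel Hinv]]]]].
  (* x_n - F vanishes along it, so its derivative along V(p) vanishes *)
  rewrite lam_prol_dlin.
  apply (vanishing_along_curve U HU _ n t0 xs0 _ _ T Y); auto.
  - apply cl_minus; [apply cl_coord | now apply cl_smooth].
  - intros t xs ys E. rewrite (E n), (HFo t xs ys) by (auto; intros; apply E; lia). reflexivity.
  - rewrite Heq. ring.
  - destruct Htc as [_ [_ [_ [_ [_ Hcc]]]]].
    apply (solutions_persist n U F z zeta Delta T Y t0 xs0 del); auto.
Qed.

Theorem theorem2p2
  (n : nat) (Hn : (2 <= n)%nat)
  (U : R -> (nat -> R) -> Prop) (HU : open_jet n U)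
  (F z zeta : Jet) (Delta : R -> (nat -> R) -> R)
  (HFo : jet_order (n - 1) F) (HFs : smooth_on U F)
  (Hzo : jet_order 0 z) (Hzs : smooth_on U z)
  (Hzeo : jet_order 1 zeta) (Hzes : smooth_on U zeta)
  (HDo : jet_order (n - 1) Delta) (HDs : smooth_on (fun _ _ => True) Delta)
  (Hzeta1 : forall t xs, U t xs -> px 1 zeta t xs <> 0)
  (HDtz : forall t xs, U t xs -> Dt n z t xs <> 0)
  (Hcoinc : forall t xs, U t xs ->
     (xs n = F t xs <-> Delta (z t xs) (fun i => zeta_seq n z zeta i t xs) = 0)) :
  let rho : Jet := fun t xs => - px 0 z t xs in
  let phi0 : Jet := fun t xs => pt z t xs in
  let lam : Jet := fun t xs =>
      (px 0 z t xs * pt zeta t xs - pt z t xs * px 0 zeta t xs)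
        / (Dt n z t xs * px 1 zeta t xs)
      - (Dt n (pt z) t xs + Dt n (px 0 z) t xs * xs 1%nat) / Dt n z t xs in
  (forall t xs, U t xs -> xs n = F t xs ->
     lam_prol n rho phi0 lam n (fun t' ys => ys n - F t' ys) t xs = 0)
  /\ (forall t xs, U t xs -> lam_prol n rho phi0 lam 1 z t xs = 0)
  /\ (forall t xs, U t xs -> lam_prol n rho phi0 lam 1 zeta t xs = 0).
Proof.
  intros rho phi0 lam.
  assert (HW := open_jet_sup n U HU).
  assert (Cz : smooth_cl U z) by now apply cl_smooth.
  assert (Cze : smooth_cl U zeta) by now apply cl_smooth.
  (* z and zeta are invariants of X^[lambda,(1)] ... *)
  assert (Kz : forall t xs, U t xs -> lam_prol n rho phi0 lam 1 z t xs = 0)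
    by (intros; exact (sym_kills_z n lam z t xs Hzo)).
  assert (Kze : forall t xs, U t xs -> lam_prol n rho phi0 lam 1 zeta t xs = 0)
    by (intros; apply (sym_kills_zeta U HW n z zeta); auto).
  (* ... hence of X^[lambda,(n)], since they have order at most 1 *)
  assert (Lift : forall f m, jet_order m f -> (m <= 1)%nat -> forall t xs, U t xs ->
            lam_prol n rho phi0 lam n f t xs = lam_prol n rho phi0 lam 1 f t xs).
  { intros f m Hf Hm t xs _. rewrite (lam_prol_order n rho phi0 lam 1 (n - 1) f m) by auto.
    f_equal. lia. }
  split; [| split; auto].
  apply (tangent_to_reduced_equation n U F z zeta Delta); auto; try lia.
  - exact (cl_sym_rho U HW z Cz).
  - exact (cl_sym_phi0 U HW z Cz).
  - apply (cl_sym_lam U HW n z zeta); auto.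
  - intros t xs Hu. rewrite (Lift z 0%nat); auto.
  - intros t xs Hu. rewrite (Lift zeta 1%nat); auto.
Qed.
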